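(* Let $g\ge1$. Put $u_1=0$, and let $u_2,\dots,u_{2g+1}$ be pairwise distinct nonzero complex numbers varying in a small open set. Let $\{\gamma_k\}_{k=1}^{2g}$ be a basis of the first homology of the curve $v^2=u\prod_{i=2}^{2g+1}(u-u_i)$, represented by cycles avoiding the branch points and infinity and transported continuously. Let $\gamma=\sum_k c_k\gamma_k$ with arbitrary constants $c_k\in\mathbb{C}$. Set $$a_1=-\oint_\gamma\frac{du}{v},\qquad a_i=\oint_\gamma\frac{du}{v}+u_i\oint_\gamma\frac{du}{(u-u_i)v}\quad(2\le i\le2g+1),$$ $$A^{(1)}=\begin{pmatrix}1/4&a_1\\0&-1/4\end{pmatrix},\qquad A^{(i)}=\begin{pmatrix}-1/4&a_i\\0&1/4\end{pmatrix}\quad(2\le i\le 2g+1).$$ Then these matrices satisfy the Schlesinger system with respect to the variables $u_2,\dots,u_{2g+1}$: $$\frac{\partial A^{(j)}}{\partial u_k}=\frac{[A^{(k)},A^{(j)}]}{u_k-u_j}\ (k\ge2,\ j\ne k),\qquad \frac{\partial A^{(k)}}{\partial u_k}=-\sum_{j\ne k}\frac{[A^{(k)},A^{(j)}]}{u_k-u_j}\ (k\ge 2).$$ Moreover, $A^{(\infty)}:=-\sum_{i=1}^{2g+1}A^{(i)}$ is constant. *)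

From Stdlib Require Import Reals Arith.
From Coquelicot Require Import Coquelicot.
Open Scope C_scope.

Fixpoint csum_from (lo n : nat) (f : nat -> C) : C :=
  match n with O => 0 | S n' => csum_from lo n' f + f (lo + n')%nat end.
Fixpoint cprod_from (lo n : nat) (f : nat -> C) : C :=
  match n with O => 1 | S n' => cprod_from lo n' f * f (lo + n')%nat end.

(* parameters: u : nat -> C, only u 2, ..., u (2g+1) are used; u_1 := 0 *)
Definition uu (u : nat -> C) (i : nat) : C := if Nat.eqb i 1 then 0 else u i.

Definition upd (u : nat -> C) (k : nat) (z : C) : nat -> C :=
  fun i => if Nat.eqb i k then z else u i.

Definition curve_rhs (g : nat) (u : nat -> C) (z : C) : C :=
  z * cprod_from 2 (2 * g) (fun i => z - u i).

(* the parameter set: an open polydisc in the coordinates u_2..u_{2g+1} *)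
Definition polydisc (g : nat) (u0 : nat -> C) (r : R) (u : nat -> C) : Prop :=
  forall i, (2 <= i <= 2 * g + 1)%nat -> (Cmod (u i - u0 i) < r)%R.

(* A closed C^1 loop t in [0,1] |-> p t in the u-plane, avoiding the branch
   points for all parameters in U, together with a continuous branch
   w u t of v along it (so (p, w) is a closed cycle on the curve), the branch
   depending continuously on the parameters (continuous transport). *)
Definition lifted_loop (g : nat) (U : (nat -> C) -> Prop)
  (p dp : R -> C) (w : (nat -> C) -> R -> C) : Prop :=
  p 0%R = p 1%R /\
  (forall t, (0 <= t <= 1)%R -> is_derive (K := R_AbsRing) p t (dp t)) /\
  (forall t, (0 <= t <= 1)%R -> continuous dp t) /\
  (forall u, U u -> forall t, (0 <= t <= 1)%R ->
      p t <> 0 /\ forall i, (2 <= i <= 2 * g + 1)%nat -> p t <> u i) /\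
  (forall u, U u -> forall t, (0 <= t <= 1)%R ->
      w u t * w u t = curve_rhs g u (p t)) /\
  (forall u, U u -> w u 0%R = w u 1%R) /\
  (forall u, U u -> forall t, (0 <= t <= 1)%R -> continuous (w u) t) /\
  (forall t, (0 <= t <= 1)%R -> forall u, U u -> forall eps : R, (0 < eps)%R ->
     exists delta : R, (0 < delta)%R /\ forall u', U u' ->
       (forall i, (2 <= i <= 2 * g + 1)%nat -> (Cmod (u' i - u i) < delta)%R) ->
       (Cmod (w u' t - w u t) < eps)%R).

(* oint_gamma f(u) du / v  for gamma = sum_{k<m} c_k gamma_k *)
Definition period (m : nat) (c : nat -> C) (p dp : nat -> R -> C)
  (w : nat -> (nat -> C) -> R -> C) (u : nat -> C) (f : C -> C) : C :=
  csum_from 0 m (fun k =>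
    c k * RInt (V := C_R_CompleteNormedModule)
                 (fun t => f (p k t) * dp k t / w k u t) 0%R 1%R).

Definition acoef m c p dp w (u : nat -> C) (i : nat) : C :=
  if Nat.eqb i 1 then - period m c p dp w u (fun _ => 1)
  else period m c p dp w u (fun _ => 1)
       + u i * period m c p dp w u (fun z => / (z - u i)).

Record mat2 := Mat2 { m11 : C; m12 : C; m21 : C; m22 : C }.
Definition mmul (A B : mat2) : mat2 :=
  Mat2 (m11 A * m11 B + m12 A * m21 B) (m11 A * m12 B + m12 A * m22 B)
       (m21 A * m11 B + m22 A * m21 B) (m21 A * m12 B + m22 A * m22 B).
Definition madd (A B : mat2) : mat2 :=
  Mat2 (m11 A + m11 B) (m12 A + m12 B) (m21 A + m21 B) (m22 A + m22 B).
Definition mscale (s : C) (A : mat2) : mat2 :=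
  Mat2 (s * m11 A) (s * m12 A) (s * m21 A) (s * m22 A).
Definition mopp (A : mat2) : mat2 := mscale (-1) A.
Definition mzero : mat2 := Mat2 0 0 0 0.
Definition mcomm (A B : mat2) : mat2 := madd (mmul A B) (mopp (mmul B A)).
Fixpoint msum_from (lo n : nat) (f : nat -> mat2) : mat2 :=
  match n with O => mzero | S n' => madd (msum_from lo n' f) (f (lo + n')%nat) end.

Definition is_mderiv (F : C -> mat2) (z : C) (M : mat2) : Prop :=
  is_derive (K := C_AbsRing) (fun z => m11 (F z)) z (m11 M) /\
  is_derive (K := C_AbsRing) (fun z => m12 (F z)) z (m12 M) /\
  is_derive (K := C_AbsRing) (fun z => m21 (F z)) z (m21 M) /\
  is_derive (K := C_AbsRing) (fun z => m22 (F z)) z (m22 M).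

Definition Amat m c p dp w (u : nat -> C) (i : nat) : mat2 :=
  if Nat.eqb i 1 then Mat2 (RtoC (1/4)) (acoef m c p dp w u 1) 0 (RtoC (-1/4))
  else Mat2 (RtoC (-1/4)) (acoef m c p dp w u i) 0 (RtoC (1/4)).

Definition Ainf (g : nat) m c p dp w (u : nat -> C) : mat2 :=
  mopp (msum_from 1 (2 * g + 1) (fun i => Amat m c p dp w u i)).

(* The periods [P(phi) = oint_gamma phi(u) du / v] are differentiated in a branch point [u_k]
   under the integral sign: near [u_k] the branch of [v] along each loop is pinned down by
   continuity, and [v] depends on [u_k] only through the factor [(u - u_k)^(1/2)], so
   [d P(phi) / d u_k = P(phi / (2 (u - u_k)))].  With [I = P(1)] and [J_i = P(1 / (u - u_i))]
   this gives [d I / d u_k = J_k / 2] and, by partial fractions,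
   [d J_j / d u_k = (J_k - J_j) / (2 (u_k - u_j))]: these are the off-diagonal Schlesinger
   equations for [a_1 = -I] and [a_i = I + u_i J_i].  Exactness of [d(u / v)] gives
   [(2g - 1) I + sum_i u_i J_i = 0], i.e. [sum_i a_i = 0], so [A^(oo)] is constant, and
   differentiating this identity in [u_k] yields the diagonal equation. *)

From Stdlib Require Import Reals Arith Lia Lra FunctionalExtensionality.
From Coquelicot Require Import Coquelicot.
Open Scope C_scope.

(** * Pointwise continuity *)

Definition cont_at {X : Type} (dist : X -> X -> R) (h : X -> C) (x : X) : Prop :=
  forall eps : R, (0 < eps)%R -> exists del : R, (0 < del)%R /\
    forall x', (dist x' x < del)%R -> (Cmod (h x' - h x) < eps)%R.
Definition distR (a b : R) : R := Rabs (a - b).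
Definition distC (a b : C) : R := Cmod (a - b).

(* Coquelicot often states equalities at a structure projection of [C]; [ring] and [field]
   only recognise them at type [C]. *)
Ltac toC := match goal with |- ?a = ?b => change (@eq C a b) end.

Lemma Cmod_minus_sym (a b : C) : Cmod (a - b) = Cmod (b - a).
Proof. replace (a - b) with (- (b - a)) by ring. apply Cmod_opp. Qed.

Lemma Cmod_minus_triangle (a b c : C) : (Cmod (a - c) <= Cmod (a - b) + Cmod (b - c))%R.
Proof. replace (a - c) with ((a - b) + (b - c)) by ring. apply Cmod_triangle. Qed.

Lemma Cmod_le_Cmod_plus_dist (a b : C) : (Cmod a <= Cmod b + Cmod (a - b))%R.
Proof. replace a with (b + (a - b)) at 1 by ring. apply Cmod_triangle. Qed.

Lemma Cmod_eq_of_small (a b : C) : (forall e, (0 < e)%R -> (Cmod (a - b) < e)%R) -> a = b.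
Proof.
  intros H. apply Ceq_minus, Cmod_eq_0.
  destruct (Rle_lt_or_eq_dec 0 (Cmod (a - b)) (Cmod_ge_0 _)) as [Hl|He]; auto.
  specialize (H _ Hl). lra.
Qed.

Lemma C2_neq_0 : (2 : C) <> 0.
Proof. intro E. apply RtoC_inj in E. lra. Qed.

Lemma Cmod_lt_Rmin_l (z : C) a b : (Cmod z < Rmin a b)%R -> (Cmod z < a)%R.
Proof. intros H. eapply Rlt_le_trans; [apply H|apply Rmin_l]. Qed.

Lemma Cmod_lt_Rmin_r (z : C) a b : (Cmod z < Rmin a b)%R -> (Cmod z < b)%R.
Proof. intros H. eapply Rlt_le_trans; [apply H|apply Rmin_r]. Qed.

Lemma continuous_cont_at (h : R -> C) t : continuous h t -> cont_at distR h t.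
Proof.
  intros H eps Heps.
  assert (Hl : locally (h t) (fun y => (Cmod (y - h t) < eps)%R)).
  { exists (mkposreal (eps/2) ltac:(lra)). intros y Hy.
    apply C_NormedModule_mixin_compat2 in Hy. simpl in Hy.
    assert (sqrt 2 < 2)%R.
    { apply Rsqr_incrst_0; try lra; [|apply sqrt_pos]. rewrite Rsqr_sqrt; unfold Rsqr; lra. }
    change (minus y (h t)) with (y - h t) in Hy. nra. }
  destruct (H _ Hl) as [d Hd]. exists d. split; [apply cond_pos|]. intros t' Ht'. apply Hd, Ht'.
Qed.

Lemma cont_at_continuous (h : R -> C) t : cont_at distR h t -> continuous h t.
Proof.
  intros H P [e He]. destruct (H e (cond_pos e)) as [d [Hd Hd']].
  exists (mkposreal d Hd). intros t' Ht'. apply He, C_NormedModule_mixin_compat1, Hd', Ht'.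
Qed.

Section ContAt.
Context {X : Type} (dist : X -> X -> R).

Lemma cont_at_const (c : C) x : cont_at dist (fun _ => c) x.
Proof.
  intros e He. exists 1%R. split; [lra|]. intros.
  replace (c - c) with (RtoC 0) by ring. rewrite Cmod_0. lra.
Qed.

Lemma cont_at_plus f g x :
  cont_at dist f x -> cont_at dist g x -> cont_at dist (fun y => f y + g y) x.
Proof.
  intros Hf Hg e He.
  destruct (Hf (e/2)%R ltac:(lra)) as [d1 [Hd1 H1]].
  destruct (Hg (e/2)%R ltac:(lra)) as [d2 [Hd2 H2]].
  exists (Rmin d1 d2). split; [apply Rmin_pos; auto|].
  intros y Hy. specialize (H1 y (Rlt_le_trans _ _ _ Hy (Rmin_l _ _))).
  specialize (H2 y (Rlt_le_trans _ _ _ Hy (Rmin_r _ _))).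
  replace (f y + g y - (f x + g x)) with ((f y - f x) + (g y - g x)) by ring.
  eapply Rle_lt_trans; [apply Cmod_triangle|lra].
Qed.

Lemma cont_at_opp f x : cont_at dist f x -> cont_at dist (fun y => - f y) x.
Proof.
  intros Hf e He. destruct (Hf e He) as [d [Hd H]]. exists d. split; auto.
  intros y Hy. replace (- f y - - f x) with (- (f y - f x)) by ring.
  rewrite Cmod_opp. auto.
Qed.

Lemma cont_at_minus f g x :
  cont_at dist f x -> cont_at dist g x -> cont_at dist (fun y => f y - g y) x.
Proof. intros. apply (cont_at_plus f (fun y => - g y)); auto. apply cont_at_opp; auto. Qed.

Lemma cont_at_mult f g x :
  cont_at dist f x -> cont_at dist g x -> cont_at dist (fun y => f y * g y) x.
Proof.
  intros Hf Hg e He.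
  set (A := Cmod (f x)). set (B := Cmod (g x)).
  assert (HA : (0 <= A)%R) by apply Cmod_ge_0.
  assert (HB : (0 <= B)%R) by apply Cmod_ge_0.
  destruct (Hf (Rmin 1 (e / (2 * (B + 1))))%R) as [d1 [Hd1 H1]].
  { apply Rmin_pos; [lra|]. apply Rdiv_lt_0_compat; lra. }
  destruct (Hg (e / (2 * (A + 1)))%R) as [d2 [Hd2 H2]].
  { apply Rdiv_lt_0_compat; lra. }
  exists (Rmin d1 d2). split; [apply Rmin_pos; auto|].
  intros y Hy. specialize (H1 y (Rlt_le_trans _ _ _ Hy (Rmin_l _ _))).
  specialize (H2 y (Rlt_le_trans _ _ _ Hy (Rmin_r _ _))).
  replace (f y * g y - f x * g x) with (f y * (g y - g x) + (f y - f x) * g x) by ring.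
  eapply Rle_lt_trans; [apply Cmod_triangle|]. rewrite !Cmod_mult.
  assert (Hfy : (Cmod (f y) <= A + 1)%R).
  { pose proof (Cmod_le_Cmod_plus_dist (f y) (f x)).
    pose proof (Rmin_l 1 (e / (2 * (B + 1)))). fold A in H. lra. }
  assert (Hm : (Cmod (f y - f x) < e / (2 * (B + 1)))%R).
  { eapply Rlt_le_trans; [apply H1|apply Rmin_r]. }
  assert (P1 : (Cmod (f y) * Cmod (g y - g x) < e/2)%R).
  { apply Rle_lt_trans with ((A+1) * Cmod (g y - g x))%R.
    - apply Rmult_le_compat_r; [apply Cmod_ge_0|lra].
    - apply Rlt_le_trans with ((A+1) * (e / (2 * (A + 1))))%R.
      + apply Rmult_lt_compat_l; lra.
      + right; field; lra. }
  assert (P2 : (Cmod (f y - f x) * B <= e/2)%R).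
  { apply Rle_trans with ((e / (2 * (B + 1))) * (B+1))%R.
    - apply Rmult_le_compat; try apply Cmod_ge_0; lra.
    - right; field; lra. }
  fold B. lra.
Qed.

Lemma cont_at_inv f x : cont_at dist f x -> f x <> 0 -> cont_at dist (fun y => / f y) x.
Proof.
  intros Hf Hnz e He.
  set (A := Cmod (f x)).
  assert (HA : (0 < A)%R) by (apply Cmod_gt_0; auto).
  destruct (Hf (Rmin (A/2) (e * A * A / 2))%R) as [d [Hd H1]].
  { apply Rmin_pos; [lra|]. apply Rdiv_lt_0_compat; [|lra]. apply Rmult_lt_0_compat; nra. }
  exists d. split; auto. intros y Hy. specialize (H1 y Hy).
  assert (Hy1 : (Cmod (f y - f x) < A/2)%R) by (eapply Rlt_le_trans; [apply H1|apply Rmin_l]).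
  assert (Hy2 : (Cmod (f y - f x) < e*A*A/2)%R) by (eapply Rlt_le_trans; [apply H1|apply Rmin_r]).
  assert (Hfy : (A/2 < Cmod (f y))%R).
  { pose proof (Cmod_le_Cmod_plus_dist (f x) (f y)).
    rewrite Cmod_minus_sym in H. fold A in H. lra. }
  assert (Hfy0 : f y <> 0) by (intro Z; rewrite Z, Cmod_0 in Hfy; lra).
  replace (/ f y - / f x) with ((f x - f y) / (f y * f x)) by (field; auto).
  rewrite Cmod_div by (apply Cmult_neq_0; auto). rewrite Cmod_mult, Cmod_minus_sym. fold A.
  apply Rlt_le_trans with ((e*A*A/2) / (Cmod (f y) * A))%R.
  { unfold Rdiv. apply Rmult_lt_compat_r; auto. apply Rinv_0_lt_compat. nra. }
  apply Rle_trans with ((e*A*A/2) / (A/2 * A))%R.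
  { unfold Rdiv. apply Rmult_le_compat_l; [nra|]. apply Rinv_le_contravar; nra. }
  right. field. lra.
Qed.

Lemma cont_at_comp (f : C -> C) (h : X -> C) x :
  cont_at dist h x -> cont_at distC f (h x) -> cont_at dist (fun y => f (h y)) x.
Proof.
  intros Hh Hf e He. destruct (Hf e He) as [d1 [Hd1 H1]].
  destruct (Hh d1 Hd1) as [d2 [Hd2 H2]]. exists d2. split; auto.
  intros y Hy. apply H1, H2, Hy.
Qed.

Lemma cont_at_csum lo n (f : nat -> X -> C) x :
  (forall i, (lo <= i < lo + n)%nat -> cont_at dist (f i) x) ->
  cont_at dist (fun y => csum_from lo n (fun i => f i y)) x.
Proof.
  induction n; intros H; simpl.
  - apply cont_at_const.
  - apply cont_at_plus; [apply IHn; intros; apply H|apply H]; lia.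
Qed.

Lemma cont_at_neq0_near f x : cont_at dist f x -> f x <> 0 ->
  exists d, (0 < d)%R /\ forall y, (dist y x < d)%R -> f y <> 0.
Proof.
  intros Hc Hn. assert (0 < Cmod (f x))%R by (apply Cmod_gt_0; auto).
  destruct (Hc (Cmod (f x))) as [d [Hd H1]]; auto.
  exists d. split; auto. intros y Hy Z. specialize (H1 y Hy). rewrite Z in H1.
  replace (0 - f x) with (- f x) in H1 by ring. rewrite Cmod_opp in H1. lra.
Qed.
End ContAt.

Lemma cont_at_id z : cont_at distC (fun y => y) z.
Proof. intros e He. exists e. split; auto. Qed.

Lemma cont_at_inv_sub (a z : C) : z <> a -> cont_at distC (fun y => / (y - a)) z.
Proof.
  intros H. apply cont_at_inv; [|apply Cminus_eq_contra, H].
  apply cont_at_minus; [apply cont_at_id|apply cont_at_const].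
Qed.

(** * Caratheodory slopes *)

(* Caratheodory's form of differentiability: [f y = f x + (y - x) h y] near [x] with [h]
   continuous at [x]; then [h x] is the derivative.  [delta y x] plays the role of [y - x]. *)
Section Slope.
Context {X : Type} (dist : X -> X -> R) (delta : X -> X -> C).

Definition is_slope (f : X -> C) (x : X) (h : X -> C) : Prop :=
  (exists del, (0 < del)%R /\ forall y, (dist y x < del)%R -> f y = f x + delta y x * h y)
  /\ cont_at dist h x.

Lemma is_slope_const (c : C) x : is_slope (fun _ => c) x (fun _ => 0).
Proof. split; [exists 1%R; split; [lra|]; intros; ring|apply cont_at_const]. Qed.

Lemma is_slope_ext f f' x h : (forall y, f y = f' y) -> is_slope f x h -> is_slope f' x h.
Proof.
  intros E [[d [Hd H]] Hc]. split; auto. exists d. split; auto.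
  intros y Hy. rewrite <- !E. auto.
Qed.

Lemma is_slope_plus f g x h k : is_slope f x h -> is_slope g x k ->
  is_slope (fun y => f y + g y) x (fun y => h y + k y).
Proof.
  intros [[d1 [Hd1 H1]] C1] [[d2 [Hd2 H2]] C2]. split; [|apply cont_at_plus; auto].
  exists (Rmin d1 d2). split; [apply Rmin_pos; auto|]. intros y Hy.
  rewrite (H1 y), (H2 y) by (eapply Rlt_le_trans; [apply Hy|apply Rmin_r||apply Rmin_l]). ring.
Qed.

Lemma is_slope_scal (a : C) f x h : is_slope f x h ->
  is_slope (fun y => a * f y) x (fun y => a * h y).
Proof.
  intros [[d [Hd H]] Hc]. split; [|apply cont_at_mult; auto; apply cont_at_const].
  exists d. split; auto. intros y Hy. rewrite (H y Hy). ring.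
Qed.

Hypothesis Cmod_delta : forall y x, Cmod (delta y x) = dist y x.
Hypothesis dist_self : forall x, dist x x = 0%R.

Lemma is_slope_cont_at f x h : is_slope f x h -> cont_at dist f x.
Proof.
  intros [[d [Hd H]] Hc] e He.
  destruct (Hc 1%R ltac:(lra)) as [d1 [Hd1 H1]].
  set (M := (Cmod (h x) + 1)%R).
  assert (HM : (0 < M)%R) by (unfold M; pose proof (Cmod_ge_0 (h x)); lra).
  exists (Rmin (Rmin d d1) (e / M)).
  split; [repeat apply Rmin_pos; auto; apply Rdiv_lt_0_compat; auto|].
  intros y Hy.
  assert (Hy1 : (dist y x < d)%R) by (eapply Rlt_le_trans; [apply Hy|];
    eapply Rle_trans; [apply Rmin_l|apply Rmin_l]).
  assert (Hy2 : (dist y x < d1)%R) by (eapply Rlt_le_trans; [apply Hy|];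
    eapply Rle_trans; [apply Rmin_l|apply Rmin_r]).
  assert (Hy3 : (dist y x < e / M)%R) by (eapply Rlt_le_trans; [apply Hy|apply Rmin_r]).
  rewrite (H y Hy1). replace (f x + delta y x * h y - f x) with (delta y x * h y) by ring.
  rewrite Cmod_mult, Cmod_delta.
  assert (Hh : (Cmod (h y) <= M)%R).
  { pose proof (Cmod_le_Cmod_plus_dist (h y) (h x)). specialize (H1 y Hy2). unfold M. lra. }
  assert (0 <= dist y x)%R by (rewrite <- Cmod_delta; apply Cmod_ge_0).
  apply Rle_lt_trans with (dist y x * M)%R; [apply Rmult_le_compat_l; auto|].
  apply Rlt_le_trans with (e / M * M)%R; [apply Rmult_lt_compat_r; auto|].
  right. field. lra.
Qed.

Lemma is_slope_mult f g x h k : is_slope f x h -> is_slope g x k ->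
  is_slope (fun y => f y * g y) x (fun y => h y * g y + f x * k y).
Proof.
  intros Hf Hg. pose proof (is_slope_cont_at _ _ _ Hg) as Gc.
  destruct Hf as [[d1 [Hd1 H1]] C1]. destruct Hg as [[d2 [Hd2 H2]] C2].
  split.
  - exists (Rmin d1 d2). split; [apply Rmin_pos; auto|]. intros y Hy.
    assert (F1 := H1 y ltac:(eapply Rlt_le_trans; [apply Hy|apply Rmin_l])).
    assert (F2 := H2 y ltac:(eapply Rlt_le_trans; [apply Hy|apply Rmin_r])).
    replace (f y * g y) with (f x * g x + (f y - f x) * g y + f x * (g y - g x)) by ring.
    rewrite F1 at 1. rewrite F2 at 2. ring.
  - apply cont_at_plus; apply cont_at_mult; auto; apply cont_at_const.
Qed.

Lemma is_slope_inv f x h : is_slope f x h -> f x <> 0 ->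
  is_slope (fun y => / f y) x (fun y => - h y * / (f y * f x)).
Proof.
  intros Hf Hn. pose proof (is_slope_cont_at _ _ _ Hf) as Fc.
  destruct (cont_at_neq0_near _ _ _ Fc Hn) as [d0 [Hd0 N0]].
  destruct Hf as [[d1 [Hd1 H1]] C1].
  split.
  - exists (Rmin d0 d1). split; [apply Rmin_pos; auto|]. intros y Hy.
    assert (Fy : f y <> 0) by (apply N0; eapply Rlt_le_trans; [apply Hy|apply Rmin_l]).
    assert (E := H1 y ltac:(eapply Rlt_le_trans; [apply Hy|apply Rmin_r])).
    assert (E' : delta y x * h y = f y - f x) by (rewrite E; ring).
    replace (/ f x + delta y x * (- h y * / (f y * f x)))
      with (/ f x - (delta y x * h y) / (f y * f x)) by (field; auto).
    rewrite E'. field. auto.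
  - apply cont_at_mult; [apply cont_at_opp; auto|].
    apply cont_at_inv; [|apply Cmult_neq_0; auto].
    apply cont_at_mult; auto. apply cont_at_const.
Qed.

(* A continuous square root [W] of a function [Q] with slope [hQ] has slope
   [hQ / (W y + W x)], since [W y - W x = (Q y - Q x) / (W y + W x)]. *)
Lemma is_slope_sqrt (W Q : X -> C) x hQ : cont_at dist W x -> W x <> 0 -> is_slope Q x hQ ->
  (exists d, (0 < d)%R /\ forall y, (dist y x < d)%R -> W y * W y = Q y) ->
  is_slope W x (fun y => hQ y / (W y + W x)).
Proof.
  intros Wc Wn [[d1 [Hd1 H1]] C1] [d2 [Hd2 H2]].
  assert (Sc : cont_at dist (fun y => W y + W x) x)
    by (apply cont_at_plus; auto; apply cont_at_const).
  assert (Sn : W x + W x <> 0).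
  { replace (W x + W x) with (2 * W x) by ring. apply Cmult_neq_0; auto. apply C2_neq_0. }
  destruct (cont_at_neq0_near _ _ _ Sc Sn) as [d0 [Hd0 N0]].
  assert (Hx2 : (dist x x < d2)%R) by (rewrite dist_self; auto).
  split.
  - exists (Rmin d0 (Rmin d1 d2)). split; [repeat apply Rmin_pos; auto|]. intros y Hy.
    assert (Hy0 : (dist y x < d0)%R) by (eapply Rlt_le_trans; [apply Hy|apply Rmin_l]).
    assert (Hy1 : (dist y x < d1)%R) by (eapply Rlt_le_trans; [apply Hy|];
      eapply Rle_trans; [apply Rmin_r|apply Rmin_l]).
    assert (Hy2 : (dist y x < d2)%R) by (eapply Rlt_le_trans; [apply Hy|];
      eapply Rle_trans; [apply Rmin_r|apply Rmin_r]).
    specialize (N0 y Hy0).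
    assert (E : delta y x * hQ y = W y * W y - W x * W x).
    { rewrite (H2 y Hy2), (H2 x Hx2), (H1 y Hy1). ring. }
    replace (W x + delta y x * (hQ y / (W y + W x)))
      with (W x + (delta y x * hQ y) / (W y + W x)) by (field; auto).
    rewrite E. field. auto.
  - apply cont_at_mult; auto. apply cont_at_inv; auto.
Qed.
End Slope.

Notation is_slopeC := (is_slope distC Cminus).
Notation is_slopeR := (is_slope distR (fun s t => RtoC (s - t))).

Lemma Cmod_deltaC (y z : C) : Cmod (y - z) = distC y z.
Proof. reflexivity. Qed.

Lemma Cmod_deltaR (s t : R) : Cmod (RtoC (s - t)) = distR s t.
Proof. apply Cmod_R. Qed.

Lemma distC_self z : distC z z = 0%R.
Proof. unfold distC. replace (z - z) with (RtoC 0) by ring. apply Cmod_0. Qed.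

Lemma distR_self t : distR t t = 0%R.
Proof. unfold distR. rewrite Rminus_diag. apply Rabs_R0. Qed.

Lemma is_slopeC_cont_at f z h : is_slopeC f z h -> cont_at distC f z.
Proof. apply is_slope_cont_at, Cmod_deltaC. Qed.

Lemma is_slopeC_mult f g z h k : is_slopeC f z h -> is_slopeC g z k ->
  is_slopeC (fun y => f y * g y) z (fun y => h y * g y + f z * k y).
Proof. apply is_slope_mult, Cmod_deltaC. Qed.

Lemma is_slopeC_id z : is_slopeC (fun y => y) z (fun _ => 1).
Proof. split; [exists 1%R; split; [lra|]; intros; simpl; ring|apply cont_at_const]. Qed.

Lemma is_slopeC_sub_const (a z : C) : is_slopeC (fun y => y - a) z (fun _ => 1).
Proof. split; [exists 1%R; split; [lra|]; intros; simpl; ring|apply cont_at_const]. Qed.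

Lemma is_slopeR_cont_at f t h : is_slopeR f t h -> cont_at distR f t.
Proof. apply is_slope_cont_at, Cmod_deltaR. Qed.

Lemma is_slopeR_mult f g t h k : is_slopeR f t h -> is_slopeR g t k ->
  is_slopeR (fun s => f s * g s) t (fun s => h s * g s + f t * k s).
Proof. apply is_slope_mult, Cmod_deltaR. Qed.

Lemma is_slopeR_inv f t h : is_slopeR f t h -> f t <> 0 ->
  is_slopeR (fun s => / f s) t (fun s => - h s * / (f s * f t)).
Proof. apply is_slope_inv, Cmod_deltaR. Qed.

Lemma is_slopeR_sqrt (W Q : R -> C) t hQ : cont_at distR W t -> W t <> 0 -> is_slopeR Q t hQ ->
  (exists d, (0 < d)%R /\ forall s, (distR s t < d)%R -> W s * W s = Q s) ->
  is_slopeR W t (fun s => hQ s / (W s + W t)).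
Proof. apply is_slope_sqrt, distR_self. Qed.

Lemma norm_CR (a : C) : @norm R_AbsRing C_R_CompleteNormedModule a = Cmod a.
Proof.
  destruct a as [x y]. unfold norm; simpl. unfold prod_norm, Cmod. simpl. f_equal.
  unfold norm; simpl. unfold abs; simpl.
  rewrite !Rmult_1_r, <- !Rabs_mult, !(Rabs_pos_eq (_*_)) by nra. reflexivity.
Qed.

Lemma norm_prod_CR (a : C) :
  @norm R_AbsRing (prod_NormedModule R_AbsRing R_NormedModule R_NormedModule) a = Cmod a.
Proof. apply norm_CR. Qed.

Lemma is_derive_eq {K : AbsRing} {V : NormedModule K} (f : K -> V) x l l' :
  is_derive f x l -> l = l' -> is_derive f x l'.
Proof. intros H <-. exact H. Qed.

Lemma is_slopeC_derive f z h : is_slopeC f z h -> is_derive (K := C_AbsRing) f z (h z).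
Proof.
  intros [[del [Hd Hf]] Hh]. split; [apply is_linear_scal_l|].
  intros x Hx.
  apply (@is_filter_lim_locally_unique C_AbsRing (AbsRing_NormedModule C_AbsRing)) in Hx.
  subst x. intros eps. destruct (Hh eps (cond_pos eps)) as [d [Hd' Hh']].
  assert (Hm := Rmin_pos _ _ Hd Hd').
  exists (mkposreal (Rmin del d / 2) ltac:(lra)). intros y Hy.
  assert (Hy' : (Cmod (y - z) < Rmin del d)%R).
  { assert (Cmod (y - z) < Rmin del d / 2)%R by exact Hy. lra. }
  change (Cmod (f y - f z - (y - z) * h z) <= eps * Cmod (y - z))%R.
  rewrite (Hf y) by (eapply Rlt_le_trans; [apply Hy'|apply Rmin_l]).
  replace (f z + (y - z) * h y - f z - (y - z) * h z) with ((y - z) * (h y - h z)) by ring.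
  rewrite Cmod_mult, Rmult_comm. apply Rmult_le_compat_r; [apply Cmod_ge_0|].
  left. apply Hh'. eapply Rlt_le_trans; [apply Hy'|apply Rmin_r].
Qed.

Lemma is_slopeR_derive f t h : is_slopeR f t h -> is_derive (K := R_AbsRing) f t (h t).
Proof.
  intros [[del [Hd Hf]] Hh]. split; [apply is_linear_scal_l|].
  intros x Hx.
  apply (@is_filter_lim_locally_unique R_AbsRing (AbsRing_NormedModule R_AbsRing)) in Hx.
  subst x. intros eps. destruct (Hh eps (cond_pos eps)) as [d [Hd' Hh']].
  exists (mkposreal (Rmin del d) (Rmin_pos _ _ Hd Hd')). intros y Hy.
  assert (Hy' : (Rabs (y - t) < Rmin del d)%R) by exact Hy.
  rewrite norm_prod_CR, scal_R_Cmult.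
  change (Cmod (f y - f t - RtoC (y - t) * h t) <= eps * Rabs (y - t))%R.
  rewrite (Hf y) by (eapply Rlt_le_trans; [apply Hy'|apply Rmin_l]).
  replace (f t + RtoC (y - t) * h y - f t - RtoC (y - t) * h t)
    with (RtoC (y - t) * (h y - h t)) by ring.
  rewrite Cmod_mult, Cmod_R, Rmult_comm. apply Rmult_le_compat_r; [apply Rabs_pos|].
  left. apply Hh'. eapply Rlt_le_trans; [apply Hy'|apply Rmin_r].
Qed.

Lemma derive_is_slopeC (f : C -> C) (z l : C) : is_derive (K := C_AbsRing) f z l ->
  exists h, h z = l /\ is_slopeC f z h.
Proof.
  intros [_ H]. specialize (H z (fun P HP => HP)).
  exists (fun y => if Ceq_dec y z then l else (f y - f z) / (y - z)).
  split; [destruct (Ceq_dec z z); congruence|split].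
  - exists 1%R. split; [lra|]. intros y _.
    destruct (Ceq_dec y z) as [->|E]; [ring|]. field. apply Cminus_eq_contra, E.
  - intros eps Heps. destruct (H (mkposreal (eps/2) ltac:(lra))) as [d Hd].
    exists d. split; [apply cond_pos|]. intros y Hy. unfold distC in Hy.
    destruct (Ceq_dec z z) as [_|]; [|congruence].
    destruct (Ceq_dec y z) as [E|E].
    + replace (l - l) with (RtoC 0) by ring. rewrite Cmod_0. lra.
    + assert (Hyz := Cminus_eq_contra _ _ E).
      specialize (Hd y Hy). simpl in Hd.
      change (Cmod (f y - f z - (y - z) * l) <= eps / 2 * Cmod (y - z))%R in Hd.
      replace ((f y - f z) / (y - z) - l) with ((f y - f z - (y - z) * l) / (y - z))
        by (field; auto).
      rewrite Cmod_div by auto.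
      assert (0 < Cmod (y - z))%R by (apply Cmod_gt_0; auto).
      apply Rle_lt_trans with (eps/2)%R; [|lra].
      unfold Rdiv. apply Rmult_le_reg_r with (Cmod (y - z)); auto.
      rewrite Rmult_assoc, Rinv_l by lra. lra.
Qed.

Lemma derive_is_slopeR (f : R -> C) (t : R) (l : C) : is_derive (K := R_AbsRing) f t l ->
  exists h, h t = l /\ is_slopeR f t h.
Proof.
  intros [_ H]. specialize (H t (fun P HP => HP)).
  exists (fun s => if Req_EM_T s t then l else (f s - f t) / RtoC (s - t)).
  split; [destruct (Req_EM_T t t); congruence|split].
  - exists 1%R. split; [lra|]. intros s _.
    destruct (Req_EM_T s t) as [->|E]; [rewrite Rminus_diag; ring|].
    field. intro Z. apply RtoC_inj in Z. apply E. lra.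
  - intros eps Heps. destruct (H (mkposreal (eps/2) ltac:(lra))) as [d Hd].
    exists d. split; [apply cond_pos|]. intros s Hs. unfold distR in Hs.
    destruct (Req_EM_T t t) as [_|]; [|congruence].
    destruct (Req_EM_T s t) as [E|E].
    + replace (l - l) with (RtoC 0) by ring. rewrite Cmod_0. lra.
    + assert (Hst : RtoC (s - t) <> 0) by (intro Z; apply RtoC_inj in Z; apply E; lra).
      specialize (Hd s Hs). simpl in Hd.
      rewrite norm_prod_CR, scal_R_Cmult in Hd.
      change (Cmod (f s - f t - RtoC (s - t) * l) <= eps / 2 * Rabs (s - t))%R in Hd.
      replace ((f s - f t) / RtoC (s - t) - l)
        with ((f s - f t - RtoC (s - t) * l) / RtoC (s - t)) by (field; auto).
      rewrite Cmod_div, Cmod_R by auto.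
      assert (0 < Rabs (s - t))%R by (apply Rabs_pos_lt; lra).
      apply Rle_lt_trans with (eps/2)%R; [|lra].
      unfold Rdiv. apply Rmult_le_reg_r with (Rabs (s - t)); auto.
      rewrite Rmult_assoc, Rinv_l by lra. lra.
Qed.

Lemma is_deriveC_cont_at (f : C -> C) z l : is_derive (K := C_AbsRing) f z l -> cont_at distC f z.
Proof.
  intros H. destruct (derive_is_slopeC f z l H) as [h [_ Hs]]. exact (is_slopeC_cont_at _ _ _ Hs).
Qed.

Lemma is_deriveR_cont_at (f : R -> C) t l : is_derive (K := R_AbsRing) f t l -> cont_at distR f t.
Proof.
  intros H. destruct (derive_is_slopeR f t l H) as [h [_ Hs]]. exact (is_slopeR_cont_at _ _ _ Hs).
Qed.

Lemma is_slopeR_comp (x : R -> C) t hx (P : C -> C) l :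
  is_slopeR x t hx -> is_derive (K := C_AbsRing) P (x t) l ->
  exists h, h t = hx t * l /\ is_slopeR (fun s => P (x s)) t h.
Proof.
  intros Hx HP. pose proof (is_slopeR_cont_at _ _ _ Hx) as Xc.
  destruct (derive_is_slopeC P (x t) l HP) as [hP [E1 [[dP [HdP E2]] E3]]].
  destruct (Xc dP HdP) as [dx [Hdx Xnear]].
  destruct Hx as [[d [Hd H]] C1].
  exists (fun s => hx s * hP (x s)). split; [rewrite E1; auto|split].
  - exists (Rmin d dx). split; [apply Rmin_pos; auto|]. intros s Hs.
    assert (Hxs : x s - x t = RtoC (s - t) * hx s)
      by (rewrite (H s ltac:(eapply Rlt_le_trans; [apply Hs|apply Rmin_l])) at 1; ring).
    rewrite (E2 (x s) (Xnear s ltac:(eapply Rlt_le_trans; [apply Hs|apply Rmin_r]))), Hxs.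
    ring.
  - apply cont_at_mult; auto. apply cont_at_comp; auto.
Qed.

Lemma is_deriveC_const_on (f : C -> C) z0 : (forall z, f z = f z0) ->
  is_derive (K := C_AbsRing) f z0 (RtoC 0).
Proof.
  intros H. apply (is_slopeC_derive f z0 (fun _ => 0)).
  apply (is_slope_ext _ _ (fun _ => f z0)); [intros z; symmetry; apply H|apply is_slope_const].
Qed.

Lemma is_deriveC_csum lo n (f : nat -> C -> C) (l : nat -> C) z :
  (forall i, (lo <= i < lo + n)%nat -> is_derive (K := C_AbsRing) (f i) z (l i)) ->
  is_derive (K := C_AbsRing) (fun y => csum_from lo n (fun i => f i y)) z (csum_from lo n l).
Proof.
  induction n; intros H; simpl.
  - apply is_deriveC_const_on. intros; reflexivity.
  - assert (IH : is_derive (K := C_AbsRing) (fun y => csum_from lo n (fun i => f i y)) z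
                    (csum_from lo n l)) by (apply IHn; intros; apply H; lia).
    exact (is_derive_plus (K := C_AbsRing) (V := C_NormedModule) _ _ z _ _
      IH (H (lo + n)%nat ltac:(lia))).
Qed.

Lemma is_deriveC_ext_near (f g : C -> C) z l :
  (exists del, (0 < del)%R /\ forall y, (Cmod (y - z) < del)%R -> f y = g y) ->
  is_derive (K := C_AbsRing) f z l -> is_derive (K := C_AbsRing) g z l.
Proof.
  intros [del [Hd H]]. apply is_derive_ext_loc. exists (mkposreal del Hd). intros y Hy. apply H, Hy.
Qed.

(** * Integrals over [0, 1] *)

Notation RIntC f a b := (RInt (V := C_R_CompleteNormedModule) f a b).
Notation ex_RIntC01 f := (ex_RInt (V := C_R_CompleteNormedModule) f 0 1).

Lemma ex_RIntC_continuous (f : R -> C) a b : (0 <= a)%R -> (a <= b)%R -> (b <= 1)%R ->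
  (forall t, (0 <= t <= 1)%R -> continuous f t) ->
  ex_RInt (V := C_R_CompleteNormedModule) f a b.
Proof.
  intros Ha Hab Hb Hc. apply ex_RInt_continuous. intros z Hz.
  rewrite Rmin_left in Hz by lra. rewrite Rmax_right in Hz by lra. apply Hc. lra.
Qed.

Lemma ex_RIntC01_cont_at (f : R -> C) :
  (forall t, (0 <= t <= 1)%R -> cont_at distR f t) -> ex_RIntC01 f.
Proof.
  intros H. apply ex_RIntC_continuous; try lra. intros t Ht. apply cont_at_continuous, H, Ht.
Qed.

Lemma Cmod_RIntC_le (f : R -> C) a b M : (0 <= a)%R -> (a <= b)%R -> (b <= 1)%R ->
  (forall t, (0 <= t <= 1)%R -> continuous f t) ->
  (forall t, (a <= t <= b)%R -> (Cmod (f t) <= M)%R) ->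
  (Cmod (RIntC f a b) <= (b - a) * M)%R.
Proof.
  intros Ha Hab Hb Hc HM. rewrite <- norm_CR.
  apply (norm_RInt_le_const (V := C_R_CompleteNormedModule) f a b); auto.
  - intros x Hx. rewrite norm_CR. apply HM, Hx.
  - apply RInt_correct, ex_RIntC_continuous; auto.
Qed.

Lemma RIntC_ext (f g : R -> C) : (forall t, (0 <= t <= 1)%R -> f t = g t) ->
  RIntC f 0 1 = RIntC g 0 1.
Proof.
  intros H. apply RInt_ext. intros x Hx. rewrite Rmin_left in Hx by lra.
  rewrite Rmax_right in Hx by lra. apply H. lra.
Qed.

Lemma ex_RIntC01_ext (f g : R -> C) :
  (forall t, (0 <= t <= 1)%R -> f t = g t) -> ex_RIntC01 f -> ex_RIntC01 g.
Proof.
  intros H Hf. eapply ex_RInt_ext; [|exact Hf]. intros x Hx. rewrite Rmin_left in Hx by lra.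
  rewrite Rmax_right in Hx by lra. apply H. lra.
Qed.

Lemma RIntC_plus (f g : R -> C) : ex_RIntC01 f -> ex_RIntC01 g ->
  RIntC (fun t => f t + g t) 0 1 = RIntC f 0 1 + RIntC g 0 1.
Proof. exact (RInt_plus (V := C_R_CompleteNormedModule) f g 0 1). Qed.

Lemma RIntC_minus (f g : R -> C) : ex_RIntC01 f -> ex_RIntC01 g ->
  RIntC (fun t => f t - g t) 0 1 = RIntC f 0 1 - RIntC g 0 1.
Proof. exact (RInt_minus (V := C_R_CompleteNormedModule) f g 0 1). Qed.

Lemma ex_RIntC01_minus (f g : R -> C) :
  ex_RIntC01 f -> ex_RIntC01 g -> ex_RIntC01 (fun t => f t - g t).
Proof. exact (ex_RInt_minus (V := C_R_CompleteNormedModule) f g 0 1). Qed.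

(* The integral is only [R]-linear in Coquelicot; complex scalars are handled componentwise. *)
Lemma is_RIntC_Cmult (f : R -> C) (c l : C) :
  is_RInt (V := C_R_CompleteNormedModule) f 0 1 l ->
  is_RInt (V := C_R_CompleteNormedModule) (fun t => c * f t) 0 1 (c * l).
Proof.
  intros H.
  assert (H1 := is_RInt_fct_extend_fst (U := R_NormedModule) (V := R_NormedModule) f 0 1 l H).
  assert (H2 := is_RInt_fct_extend_snd (U := R_NormedModule) (V := R_NormedModule) f 0 1 l H).
  destruct c as [c1 c2], l as [l1 l2].
  unfold Cmult at 2. simpl fst; simpl snd. simpl in H1, H2.
  assert (A1 := is_RInt_scal (V := R_NormedModule) _ 0 1 c1 l1 H1).
  assert (A2 := is_RInt_scal (V := R_NormedModule) _ 0 1 c2 l2 H2).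
  assert (A3 := is_RInt_scal (V := R_NormedModule) _ 0 1 c1 l2 H2).
  assert (A4 := is_RInt_scal (V := R_NormedModule) _ 0 1 c2 l1 H1).
  assert (B1 := is_RInt_minus (V := R_NormedModule) _ _ 0 1 _ _ A1 A2).
  assert (B2 := is_RInt_plus (V := R_NormedModule) _ _ 0 1 _ _ A3 A4).
  apply (is_RInt_fct_extend_pair (U := R_NormedModule) (V := R_NormedModule));
    (eapply is_RInt_ext; [|eassumption]); intros x _; simpl;
    unfold minus, plus, opp, scal; simpl; unfold mult; simpl; destruct (f x); simpl; ring.
Qed.

Lemma RIntC_Cmult (f : R -> C) (c : C) : ex_RIntC01 f ->
  RIntC (fun t => c * f t) 0 1 = c * RIntC f 0 1.
Proof. intros H. apply is_RInt_unique, is_RIntC_Cmult, RInt_correct, H. Qed.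

Lemma ex_RIntC01_Cmult (f : R -> C) (c : C) : ex_RIntC01 f -> ex_RIntC01 (fun t => c * f t).
Proof. intros H. eexists. apply is_RIntC_Cmult, RInt_correct, H. Qed.

Lemma RIntC_Chasles3 (f : R -> C) a b : (0 <= a <= b)%R -> (b <= 1)%R ->
  (forall t, (0 <= t <= 1)%R -> continuous f t) ->
  RIntC f 0 1 = RIntC f 0 a + RIntC f a b + RIntC f b 1.
Proof.
  intros Hab Hb Hf.
  rewrite <- (RInt_Chasles (V := C_R_CompleteNormedModule) f 0 b 1),
          <- (RInt_Chasles (V := C_R_CompleteNormedModule) f 0 a b); [reflexivity|..];
    apply ex_RIntC_continuous; auto; lra.
Qed.

Definition bounded01 (F : R -> C) : Prop :=
  exists M, (0 < M)%R /\ forall t, (0 <= t <= 1)%R -> (Cmod (F t) <= M)%R.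

Lemma continuous01_bounded (f : R -> C) :
  (forall t, (0 <= t <= 1)%R -> continuous f t) -> bounded01 f.
Proof.
  intros Hf.
  destruct (bounded_continuity (V := C_R_CompleteNormedModule) f 0 1) as [M HM];
    [intros t Ht; apply Hf, Ht|].
  exists (Rabs M + 1)%R. split; [pose proof (Rabs_pos M); lra|].
  intros t Ht. specialize (HM t Ht). rewrite norm_CR in HM. pose proof (Rle_abs M). lra.
Qed.

Lemma cont_at01_bounded (f : R -> C) :
  (forall t, (0 <= t <= 1)%R -> cont_at distR f t) -> bounded01 f.
Proof. intros H. apply continuous01_bounded. intros t Ht. apply cont_at_continuous, H, Ht. Qed.

(* Fundamental theorem of calculus with a primitive that is differentiable only inside
   [0, 1] and merely continuous at the endpoints: integrate over [a, b] with [a] close to [0]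
   and [b] close to [1], and let the two end pieces go to zero. *)
Lemma RIntC_primitive (f G : R -> C) :
  (forall t, (0 <= t <= 1)%R -> continuous f t) ->
  (forall t, (0 <= t <= 1)%R -> cont_at distR G t) ->
  (forall t, (0 < t < 1)%R -> is_derive (K := R_AbsRing) G t (f t)) ->
  RIntC f 0 1 = G 1%R - G 0%R.
Proof.
  intros Hf HG HD. destruct (continuous01_bounded f Hf) as [M [HM0 HM]].
  apply Cmod_eq_of_small. intros e He.
  destruct (HG 0%R ltac:(lra) (e/4)%R ltac:(lra)) as [d0 [Hd0 H0]].
  destruct (HG 1%R ltac:(lra) (e/4)%R ltac:(lra)) as [d1 [Hd1 H1]].
  set (eta := Rmin (Rmin (1/3) (Rmin (d0/2) (d1/2))) (e / (8 * M))).
  assert (Eeta : (0 < e / (8 * M))%R) by (apply Rdiv_lt_0_compat; lra).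
  assert (Heta : (0 < eta)%R) by (unfold eta; repeat apply Rmin_pos; lra).
  assert (Heta1 : (eta <= 1/3)%R /\ (eta <= d0/2)%R /\ (eta <= d1/2)%R /\ (eta <= e / (8 * M))%R)
    by (unfold eta, Rmin; repeat destruct Rle_dec; lra).
  destruct Heta1 as [E1 [E2 [E3 E4]]].
  assert (Imid : RIntC f eta (1 - eta) = G (1 - eta)%R - G eta).
  { apply is_RInt_unique, (is_RInt_derive (V := C_R_CompleteNormedModule) G f);
      intros x Hx; rewrite Rmin_left in Hx by lra; rewrite Rmax_right in Hx by lra;
      [apply HD|apply Hf]; lra. }
  assert (B1 : (Cmod (RIntC f 0 eta) <= (eta - 0) * M)%R)
    by (apply Cmod_RIntC_le; auto; try lra; intros; apply HM; lra).
  assert (B2 : (Cmod (RIntC f (1 - eta) 1) <= (1 - (1 - eta)) * M)%R)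
    by (apply Cmod_RIntC_le; auto; try lra; intros; apply HM; lra).
  assert (B3 : (Cmod (G eta - G 0%R) < e/4)%R)
    by (apply H0; unfold distR; rewrite Rabs_right; lra).
  assert (B4 : (Cmod (G (1 - eta)%R - G 1%R) < e/4)%R)
    by (apply H1; unfold distR; rewrite Rabs_left; lra).
  assert (B5 : (eta * M <= e/8)%R).
  { apply Rle_trans with (e / (8 * M) * M)%R; [apply Rmult_le_compat_r; lra|right; field; lra]. }
  rewrite (RIntC_Chasles3 f eta (1 - eta)) by (auto; lra). rewrite Imid.
  replace (RIntC f 0 eta + (G (1 - eta)%R - G eta) + RIntC f (1 - eta) 1 - (G 1%R - G 0%R))
    with (RIntC f 0 eta + RIntC f (1 - eta) 1 + (G (1 - eta)%R - G 1%R) - (G eta - G 0%R))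
    by ring.
  eapply Rle_lt_trans; [apply Cmod_triangle|]. rewrite Cmod_opp.
  eapply Rle_lt_trans.
  { apply Rplus_le_compat_r. eapply Rle_trans; [apply Cmod_triangle|].
    apply Rplus_le_compat_r, Cmod_triangle. }
  replace (1 - (1 - eta))%R with eta in B2 by ring. lra.
Qed.

(** * Finite sums and products *)

Lemma csum_ext lo n (f g : nat -> C) : (forall i, (lo <= i < lo + n)%nat -> f i = g i) ->
  csum_from lo n f = csum_from lo n g.
Proof. induction n; intros H; simpl; auto. rewrite IHn, H; auto; [lia|intros; apply H; lia]. Qed.

Lemma csum_plus lo n (f g : nat -> C) :
  csum_from lo n (fun i => f i + g i) = csum_from lo n f + csum_from lo n g.
Proof. induction n; simpl; [ring|rewrite IHn; ring]. Qed.

Lemma csum_scal lo n (c : C) (f : nat -> C) :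
  csum_from lo n (fun i => c * f i) = c * csum_from lo n f.
Proof. induction n; simpl; [ring|rewrite IHn; ring]. Qed.

Lemma csum_const lo n (c : C) : csum_from lo n (fun _ => c) = INR n * c.
Proof.
  induction n; [simpl; ring|].
  change (csum_from lo n (fun _ => c) + c = INR (S n) * c). rewrite IHn, S_INR, RtoC_plus. ring.
Qed.

Lemma csum_zero lo n (f : nat -> C) :
  (forall i, (lo <= i < lo + n)%nat -> f i = 0) -> csum_from lo n f = 0.
Proof. intros H. rewrite (csum_ext lo n f (fun _ => 0)), csum_const by auto. ring. Qed.

Lemma csum_from1 n (f : nat -> C) : csum_from 1 (S n) f = f 1%nat + csum_from 2 n f.
Proof.
  induction n; simpl; [ring|]. simpl in IHn. rewrite IHn.
  replace (1 + S n)%nat with (2 + n)%nat by lia. ring.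
Qed.

Lemma csum_skip lo n k (f : nat -> C) : (lo <= k < lo + n)%nat ->
  csum_from lo n (fun i => if Nat.eqb i k then 0 else f i) = csum_from lo n f - f k.
Proof.
  induction n; intros H; simpl; [lia|].
  destruct (Nat.eq_dec k (lo + n)%nat) as [->|E].
  - rewrite Nat.eqb_refl, (csum_ext lo n _ f); [ring|].
    intros i Hi. destruct (Nat.eqb_spec i (lo + n)); [lia|auto].
  - rewrite IHn by lia. destruct (Nat.eqb_spec (lo + n) k); [lia|ring].
Qed.

Lemma cprod_neq0 lo n (f : nat -> C) : (forall i, (lo <= i < lo + n)%nat -> f i <> 0) ->
  cprod_from lo n f <> 0.
Proof.
  induction n; intros H; simpl; [intro E; apply RtoC_inj in E; lra|].
  apply Cmult_neq_0; [apply IHn; intros; apply H|apply H]; lia.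
Qed.

Lemma is_slopeC_cprod_sub lo n (u : nat -> C) y :
  (forall i, (lo <= i < lo + n)%nat -> y <> u i) ->
  exists h, h y = cprod_from lo n (fun i => y - u i) * csum_from lo n (fun i => / (y - u i)) /\
    is_slopeC (fun y => cprod_from lo n (fun i => y - u i)) y h.
Proof.
  induction n; intros H.
  - exists (fun _ => 0). split; [simpl; ring|apply (is_slope_const _ _ 1)].
  - destruct IHn as [h [Hh Hs]]; [intros; apply H; lia|].
    eexists. split; [|apply (is_slopeC_mult _ _ _ _ _ Hs (is_slopeC_sub_const (u (lo + n)%nat) y))].
    simpl. rewrite Hh. field. apply Cminus_eq_contra, H. lia.
Qed.

(** * Periods on the hyperelliptic curve *)

Definition curve_logderiv (g : nat) (u : nat -> C) (y : C) : C :=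
  / y + csum_from 2 (2 * g) (fun i => / (y - u i)).

Section Curve.
Variables (g : nat) (u : nat -> C) (y : C).
Hypothesis y_neq0 : y <> 0.
Hypothesis y_neq_u : forall i, (2 <= i <= 2 * g + 1)%nat -> y <> u i.

Lemma curve_rhs_neq0 : curve_rhs g u y <> 0.
Proof.
  apply Cmult_neq_0; auto. apply cprod_neq0. intros i Hi. apply Cminus_eq_contra, y_neq_u. lia.
Qed.

Lemma is_derive_curve_rhs :
  is_derive (K := C_AbsRing) (curve_rhs g u) y (curve_rhs g u y * curve_logderiv g u y).
Proof.
  destruct (is_slopeC_cprod_sub 2 (2*g) u y) as [h [Hh Hs]]; [intros; apply y_neq_u; lia|].
  assert (Hs2 := is_slopeC_derive _ _ _ (is_slopeC_mult _ _ _ _ _ (is_slopeC_id y) Hs)).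
  replace (curve_rhs g u y * curve_logderiv g u y)
    with (1 * cprod_from 2 (2 * g) (fun i => y - u i) + y * h y); [exact Hs2|].
  rewrite Hh. unfold curve_rhs, curve_logderiv. toC. field. auto.
Qed.

Lemma curve_logderiv_cont_at : cont_at distC (curve_logderiv g u) y.
Proof.
  apply cont_at_plus; [apply cont_at_inv; auto; apply cont_at_id|].
  apply (cont_at_csum distC 2 (2*g) (fun i y => / (y - u i))). intros i Hi.
  apply cont_at_inv_sub, y_neq_u. lia.
Qed.
End Curve.

Section LiftedLoop.
Variables (g : nat) (U : (nat -> C) -> Prop) (p dp : R -> C) (w : (nat -> C) -> R -> C).
Hypothesis HL : lifted_loop g U p dp w.

Lemma loop_derive t : (0 <= t <= 1)%R -> is_derive (K := R_AbsRing) p t (dp t).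
Proof. apply HL. Qed.

Lemma loop_cont_at t : (0 <= t <= 1)%R -> cont_at distR p t.
Proof. intros Ht. exact (is_deriveR_cont_at _ _ _ (loop_derive t Ht)). Qed.

Lemma loop_dp_cont_at t : (0 <= t <= 1)%R -> cont_at distR dp t.
Proof. intros Ht. apply continuous_cont_at, HL, Ht. Qed.

Lemma loop_avoids u t : U u -> (0 <= t <= 1)%R ->
  p t <> 0 /\ forall i, (2 <= i <= 2 * g + 1)%nat -> p t <> u i.
Proof. intros Hu Ht. apply HL; auto. Qed.

Lemma loop_w_sq u t : U u -> (0 <= t <= 1)%R -> w u t * w u t = curve_rhs g u (p t).
Proof. intros Hu Ht. apply HL; auto. Qed.

Lemma loop_w_cont_at u t : U u -> (0 <= t <= 1)%R -> cont_at distR (w u) t.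
Proof. intros Hu Ht. apply continuous_cont_at, HL; auto. Qed.

Lemma loop_w_neq0 u t : U u -> (0 <= t <= 1)%R -> w u t <> 0.
Proof.
  intros Hu Ht E. destruct (loop_avoids u t Hu Ht) as [H0 Hi].
  apply (curve_rhs_neq0 g u (p t) H0 Hi). rewrite <- (loop_w_sq u t Hu Ht), E. toC. ring.
Qed.

Lemma loop_integrand_cont_at u phi t : U u -> (0 <= t <= 1)%R -> cont_at distC phi (p t) ->
  cont_at distR (fun t => phi (p t) * dp t / w u t) t.
Proof.
  intros Hu Ht Hphi. unfold Cdiv.
  apply cont_at_mult; [apply cont_at_mult|apply cont_at_inv].
  - apply cont_at_comp; auto. apply loop_cont_at, Ht.
  - apply loop_dp_cont_at, Ht.
  - apply loop_w_cont_at; auto.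
  - apply loop_w_neq0; auto.
Qed.

Lemma ex_RIntC01_loop u phi : U u -> (forall t, (0 <= t <= 1)%R -> cont_at distC phi (p t)) ->
  ex_RIntC01 (fun t => phi (p t) * dp t / w u t).
Proof.
  intros Hu Hphi. apply ex_RIntC01_cont_at. intros t Ht. apply loop_integrand_cont_at; auto.
Qed.

(* [d (Phi / v) = (Phi' - Phi (log Q)' / 2) dy / v] on the curve [v^2 = Q(y)]. *)
Lemma is_derive_loop_primitive u (Phi Phi' : C -> C) t : U u -> (0 < t < 1)%R ->
  is_derive (K := C_AbsRing) Phi (p t) (Phi' (p t)) ->
  is_derive (K := R_AbsRing) (fun s => Phi (p s) * / w u s) t
    ((Phi' (p t) - Phi (p t) * curve_logderiv g u (p t) / 2) * dp t / w u t).
Proof.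
  intros Hu Ht HPhi. assert (Ht' : (0 <= t <= 1)%R) by lra.
  destruct (loop_avoids u t Hu Ht') as [H0 Hi].
  assert (Wt := loop_w_neq0 u t Hu Ht').
  destruct (derive_is_slopeR p t (dp t) (loop_derive t Ht')) as [hp [Ehp Sp]].
  destruct (is_slopeR_comp p t hp Phi _ Sp HPhi) as [hPhi [EhPhi SPhi]].
  destruct (is_slopeR_comp p t hp (curve_rhs g u) _ Sp (is_derive_curve_rhs g u (p t) H0 Hi))
    as [hQ [EhQ SQ]].
  assert (Sw : is_slopeR (w u) t (fun s => hQ s / (w u s + w u t))).
  { apply (is_slopeR_sqrt _ (fun s => curve_rhs g u (p s))); auto; [apply loop_w_cont_at; auto|].
    exists (Rmin t (1 - t)). split; [apply Rmin_pos; lra|].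
    intros s Hs. apply loop_w_sq; auto. unfold distR in Hs.
    assert (A1 : (Rabs (s - t) < t)%R) by (eapply Rlt_le_trans; [apply Hs|apply Rmin_l]).
    assert (A2 : (Rabs (s - t) < 1 - t)%R) by (eapply Rlt_le_trans; [apply Hs|apply Rmin_r]).
    apply Rabs_lt_between in A1. apply Rabs_lt_between in A2. lra. }
  assert (SG := is_slopeR_derive _ _ _ (is_slopeR_mult _ _ _ _ _ SPhi (is_slopeR_inv _ _ _ Sw Wt))).
  eapply is_derive_eq; [exact SG|].
  cbv beta. rewrite EhPhi, EhQ, Ehp, <- (loop_w_sq u t Hu Ht'). toC.
  field. split; auto. replace (w u t + w u t) with (2 * w u t) by ring.
  apply Cmult_neq_0; auto. apply C2_neq_0.
Qed.

Lemma loop_exact u (Phi Phi' : C -> C) : U u ->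
  (forall t, (0 <= t <= 1)%R -> is_derive (K := C_AbsRing) Phi (p t) (Phi' (p t))) ->
  (forall t, (0 <= t <= 1)%R -> cont_at distC Phi' (p t)) ->
  RIntC (fun t => (Phi' (p t) - Phi (p t) * curve_logderiv g u (p t) / 2) * dp t / w u t) 0 1
  = RtoC 0.
Proof.
  intros Hu HPhi HPhi'.
  rewrite (RIntC_primitive _ (fun t => Phi (p t) * / w u t)).
  - destruct HL as [Hp01 [_ [_ [_ [_ [Hw01 _]]]]]]. rewrite Hp01, (Hw01 u Hu). toC. ring.
  - intros t Ht. apply cont_at_continuous.
    apply (loop_integrand_cont_at u (fun y => Phi' y - Phi y * curve_logderiv g u y / 2)); auto.
    destruct (loop_avoids u t Hu Ht) as [H0 Hi].
    apply cont_at_minus; auto. unfold Cdiv.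
    apply cont_at_mult; [|apply cont_at_const].
    apply cont_at_mult; [apply (is_deriveC_cont_at _ _ _ (HPhi t Ht))|].
    apply curve_logderiv_cont_at; auto.
  - intros t Ht. apply cont_at_mult.
    + apply cont_at_comp; [apply loop_cont_at, Ht|apply (is_deriveC_cont_at _ _ _ (HPhi t Ht))].
    + apply cont_at_inv; [apply loop_w_cont_at|apply loop_w_neq0]; auto.
  - intros t Ht. apply is_derive_loop_primitive; auto. apply HPhi. lra.
Qed.
End LiftedLoop.

Definition cont_on_loops (m : nat) (p : nat -> R -> C) (phi : C -> C) : Prop :=
  forall l, (l < m)%nat -> forall t, (0 <= t <= 1)%R -> cont_at distC phi (p l t).

Lemma cont_on_loops_const m p (a : C) : cont_on_loops m p (fun _ => a).
Proof. intros l Hl t Ht. apply cont_at_const. Qed.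

Lemma cont_on_loops_csum m p lo n (phi : nat -> C -> C) :
  (forall i, (lo <= i < lo + n)%nat -> cont_on_loops m p (phi i)) ->
  cont_on_loops m p (fun y => csum_from lo n (fun i => phi i y)).
Proof. intros H l Hl t Ht. apply (cont_at_csum distC lo n phi). intros i Hi. apply H; auto. Qed.

Lemma cont_on_loops_inv_sub m p (a : C) :
  (forall l t, (l < m)%nat -> (0 <= t <= 1)%R -> p l t <> a) ->
  cont_on_loops m p (fun y => / (y - a)).
Proof. intros H l Hl t Ht. apply cont_at_inv_sub, H; auto. Qed.

Section Periods.
Variables (g m : nat) (U : (nat -> C) -> Prop) (c : nat -> C) (p dp : nat -> R -> C)
  (w : nat -> (nat -> C) -> R -> C).
Hypothesis HL : forall l, (l < m)%nat -> lifted_loop g U (p l) (dp l) (w l).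

Lemma period_ext u phi1 phi2 :
  (forall l, (l < m)%nat -> forall t, (0 <= t <= 1)%R -> phi1 (p l t) = phi2 (p l t)) ->
  period m c p dp w u phi1 = period m c p dp w u phi2.
Proof.
  intros H. apply csum_ext. intros l Hl. f_equal. apply RIntC_ext.
  intros t Ht. rewrite H; auto. lia.
Qed.

Lemma period_lin u (a b : C) phi1 phi2 : U u ->
  cont_on_loops m p phi1 -> cont_on_loops m p phi2 ->
  period m c p dp w u (fun y => a * phi1 y + b * phi2 y) =
  a * period m c p dp w u phi1 + b * period m c p dp w u phi2.
Proof.
  intros Hu H1 H2. unfold period.
  rewrite <- !csum_scal, <- csum_plus. apply csum_ext. intros l Hl.
  assert (HLl := HL l ltac:(lia)).
  assert (E1 := ex_RIntC01_loop _ _ _ _ _ HLl u phi1 Hu (H1 l ltac:(lia))).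
  assert (E2 := ex_RIntC01_loop _ _ _ _ _ HLl u phi2 Hu (H2 l ltac:(lia))).
  rewrite (RIntC_ext _ (fun t => a * (phi1 (p l t) * dp l t / w l u t)
                                + b * (phi2 (p l t) * dp l t / w l u t))).
  - rewrite RIntC_plus, !RIntC_Cmult by (auto; apply ex_RIntC01_Cmult; auto). toC. ring.
  - intros t Ht. pose proof (loop_w_neq0 _ _ _ _ _ HLl u t Hu Ht). toC. field. auto.
Qed.

Lemma period_plus u phi1 phi2 : U u -> cont_on_loops m p phi1 -> cont_on_loops m p phi2 ->
  period m c p dp w u (fun y => phi1 y + phi2 y)
  = period m c p dp w u phi1 + period m c p dp w u phi2.
Proof.
  intros Hu H1 H2. rewrite (period_ext u _ (fun y => 1 * phi1 y + 1 * phi2 y)).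
  - rewrite period_lin by auto. ring.
  - intros. ring.
Qed.

Lemma period_scal u (a : C) phi : U u -> cont_on_loops m p phi ->
  period m c p dp w u (fun y => a * phi y) = a * period m c p dp w u phi.
Proof.
  intros Hu H. rewrite (period_ext u _ (fun y => a * phi y + 0 * phi y)).
  - rewrite period_lin by auto. ring.
  - intros. ring.
Qed.

Lemma period_csum u lo n (phi : nat -> C -> C) : U u ->
  (forall i, (lo <= i < lo + n)%nat -> cont_on_loops m p (phi i)) ->
  period m c p dp w u (fun y => csum_from lo n (fun i => phi i y)) =
  csum_from lo n (fun i => period m c p dp w u (phi i)).
Proof.
  intros Hu. induction n; intros H; simpl.
  - rewrite (period_ext u _ (fun y => 0 * (fun _ => RtoC 1) y)) by (intros; simpl; ring).
    rewrite period_scal by (auto; apply cont_on_loops_const). ring.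
  - rewrite period_plus, IHn; auto; [intros; apply H; lia| |apply H; lia].
    apply cont_on_loops_csum. intros; apply H; lia.
Qed.

Lemma period_exact u (Phi Phi' : C -> C) : U u ->
  (forall l, (l < m)%nat -> forall t, (0 <= t <= 1)%R ->
     is_derive (K := C_AbsRing) Phi (p l t) (Phi' (p l t)) /\ cont_at distC Phi' (p l t)) ->
  period m c p dp w u (fun y => Phi' y - Phi y * curve_logderiv g u y / 2) = 0.
Proof.
  intros Hu H. unfold period. rewrite csum_zero; auto.
  intros l Hl. rewrite (loop_exact g U (p l) (dp l) (w l)); [ring|apply HL; lia|auto|..];
    intros; apply H; auto; lia.
Qed.
End Periods.

(** * Uniform limits in a parameter *)

Definition bounded_away01 (F : R -> C) : Prop :=
  exists m, (0 < m)%R /\ forall t, (0 <= t <= 1)%R -> (m <= Cmod (F t))%R.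

Lemma bounded01_mult F G : bounded01 F -> bounded01 G -> bounded01 (fun t => F t * G t).
Proof.
  intros [A [HA BA]] [B [HB BB]]. exists (A * B)%R. split; [nra|].
  intros t Ht. rewrite Cmod_mult. apply Rmult_le_compat; try apply Cmod_ge_0; auto.
Qed.

Lemma bounded01_inv F : bounded_away01 F -> bounded01 (fun t => / F t).
Proof.
  intros [m [Hm Bm]]. exists (/ m)%R. split; [apply Rinv_0_lt_compat; auto|].
  intros t Ht. specialize (Bm t Ht). assert (F t <> 0) by (intro Z; rewrite Z, Cmod_0 in Bm; lra).
  rewrite Cmod_inv by auto. apply Rinv_le_contravar; auto.
Qed.

Lemma bounded_away01_mult F G :
  bounded_away01 F -> bounded_away01 G -> bounded_away01 (fun t => F t * G t).
Proof.
  intros [A [HA BA]] [B [HB BB]]. exists (A * B)%R. split; [nra|].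
  intros t Ht. rewrite Cmod_mult. apply Rmult_le_compat; try lra; auto.
Qed.

Lemma cont_at01_bounded_away (f : R -> C) : (forall t, (0 <= t <= 1)%R -> cont_at distR f t) ->
  (forall t, (0 <= t <= 1)%R -> f t <> 0) -> bounded_away01 f.
Proof.
  intros H Hn.
  destruct (continuity_ab_min (fun s => Cmod (f s)) 0 1) as [s [Hm Hs]]; [lra| |].
  - intros t Ht eps Heps. destruct (H t Ht eps Heps) as [d [Hd H1]]. exists d. split; auto.
    intros t' [_ Ht']. simpl in *. unfold R_dist in *.
    pose proof (norm_triangle_inv (V := C_NormedModule) (f t') (f t)).
    change (Rabs (Cmod (f t') - Cmod (f t)) <= Cmod (f t' - f t))%R in H0.
    specialize (H1 t' Ht'). lra.
  - exists (Cmod (f s)). split; [apply Cmod_gt_0; auto|]. intros t Ht. apply Hm, Ht.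
Qed.

Definition unif_lim (z0 : C) (F : C -> R -> C) (F0 : R -> C) : Prop :=
  forall eps, (0 < eps)%R -> exists eta, (0 < eta)%R /\ forall z, (Cmod (z - z0) < eta)%R ->
    forall t, (0 <= t <= 1)%R -> (Cmod (F z t - F0 t) < eps)%R.

Section UnifLim.
Variable z0 : C.

Lemma unif_lim_const F0 : unif_lim z0 (fun _ => F0) F0.
Proof.
  intros e He. exists 1%R. split; [lra|]. intros.
  replace (F0 t - F0 t) with (RtoC 0) by ring. rewrite Cmod_0. lra.
Qed.

Lemma unif_lim_plus F G F0 G0 : unif_lim z0 F F0 -> unif_lim z0 G G0 ->
  unif_lim z0 (fun z t => F z t + G z t) (fun t => F0 t + G0 t).
Proof.
  intros Hf Hg e He.
  destruct (Hf (e/2)%R ltac:(lra)) as [d1 [Hd1 H1]].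
  destruct (Hg (e/2)%R ltac:(lra)) as [d2 [Hd2 H2]].
  exists (Rmin d1 d2). split; [apply Rmin_pos; auto|].
  intros y Hy t Ht. specialize (H1 y (Cmod_lt_Rmin_l _ _ _ Hy) t Ht).
  specialize (H2 y (Cmod_lt_Rmin_r _ _ _ Hy) t Ht).
  replace (F y t + G y t - (F0 t + G0 t)) with ((F y t - F0 t) + (G y t - G0 t)) by ring.
  eapply Rle_lt_trans; [apply Cmod_triangle|lra].
Qed.

Lemma unif_lim_mult F G F0 G0 : unif_lim z0 F F0 -> unif_lim z0 G G0 ->
  bounded01 F0 -> bounded01 G0 ->
  unif_lim z0 (fun z t => F z t * G z t) (fun t => F0 t * G0 t).
Proof.
  intros Hf Hg [A [HA BA]] [B [HB BB]] e He.
  destruct (Hf (Rmin 1 (e / (2 * (B + 1))))%R) as [d1 [Hd1 H1]].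
  { apply Rmin_pos; [lra|]. apply Rdiv_lt_0_compat; lra. }
  destruct (Hg (e / (2 * (A + 1)))%R) as [d2 [Hd2 H2]]; [apply Rdiv_lt_0_compat; lra|].
  exists (Rmin d1 d2). split; [apply Rmin_pos; auto|].
  intros y Hy t Ht. specialize (H1 y (Cmod_lt_Rmin_l _ _ _ Hy) t Ht).
  specialize (H2 y (Cmod_lt_Rmin_r _ _ _ Hy) t Ht).
  specialize (BA t Ht). specialize (BB t Ht).
  replace (F y t * G y t - F0 t * G0 t)
    with (F y t * (G y t - G0 t) + (F y t - F0 t) * G0 t) by ring.
  eapply Rle_lt_trans; [apply Cmod_triangle|]. rewrite !Cmod_mult.
  assert (Hfy : (Cmod (F y t) <= A + 1)%R).
  { pose proof (Cmod_le_Cmod_plus_dist (F y t) (F0 t)).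
    pose proof (Rmin_l 1 (e / (2 * (B + 1)))). lra. }
  assert (Hm : (Cmod (F y t - F0 t) < e / (2 * (B + 1)))%R)
    by (eapply Rlt_le_trans; [apply H1|apply Rmin_r]).
  assert (P1 : (Cmod (F y t) * Cmod (G y t - G0 t) < e/2)%R).
  { apply Rle_lt_trans with ((A+1) * Cmod (G y t - G0 t))%R;
      [apply Rmult_le_compat_r; [apply Cmod_ge_0|lra]|].
    apply Rlt_le_trans with ((A+1) * (e / (2 * (A + 1))))%R;
      [apply Rmult_lt_compat_l; lra|right; field; lra]. }
  assert (P2 : (Cmod (F y t - F0 t) * Cmod (G0 t) <= e/2)%R).
  { apply Rle_trans with ((e / (2 * (B + 1))) * (B+1))%R;
      [apply Rmult_le_compat; try apply Cmod_ge_0; lra|right; field; lra]. }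
  lra.
Qed.

Lemma unif_lim_inv F F0 : unif_lim z0 F F0 -> bounded_away01 F0 ->
  unif_lim z0 (fun z t => / F z t) (fun t => / F0 t).
Proof.
  intros Hf [A [HA BA]] e He.
  destruct (Hf (Rmin (A/2) (e * A * A / 2))%R) as [d [Hd H1]].
  { apply Rmin_pos; [lra|]. apply Rdiv_lt_0_compat; [|lra]. apply Rmult_lt_0_compat; nra. }
  exists d. split; auto. intros y Hy t Ht. specialize (H1 y Hy t Ht). specialize (BA t Ht).
  assert (Hy1 : (Cmod (F y t - F0 t) < A/2)%R) by (eapply Rlt_le_trans; [apply H1|apply Rmin_l]).
  assert (Hy2 : (Cmod (F y t - F0 t) < e*A*A/2)%R)
    by (eapply Rlt_le_trans; [apply H1|apply Rmin_r]).
  assert (Hfy : (A/2 < Cmod (F y t))%R).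
  { pose proof (Cmod_le_Cmod_plus_dist (F0 t) (F y t)). rewrite Cmod_minus_sym in H. lra. }
  assert (Hfy0 : F y t <> 0) by (intro Z; rewrite Z, Cmod_0 in Hfy; lra).
  assert (Hf0 : F0 t <> 0) by (intro Z; rewrite Z, Cmod_0 in BA; lra).
  replace (/ F y t - / F0 t) with ((F0 t - F y t) / (F y t * F0 t)) by (field; auto).
  rewrite Cmod_div by (apply Cmult_neq_0; auto). rewrite Cmod_mult, Cmod_minus_sym.
  apply Rlt_le_trans with ((e*A*A/2) / (Cmod (F y t) * Cmod (F0 t)))%R.
  { unfold Rdiv. apply Rmult_lt_compat_r; auto. apply Rinv_0_lt_compat. nra. }
  apply Rle_trans with ((e*A*A/2) / (A/2 * A))%R.
  { unfold Rdiv. apply Rmult_le_compat_l; [nra|]. apply Rinv_le_contravar; nra. }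
  right. field. lra.
Qed.

Lemma unif_lim_RIntC F : unif_lim z0 F (F z0) ->
  (exists rho, (0 < rho)%R /\ forall z, (Cmod (z - z0) < rho)%R -> ex_RIntC01 (F z)) ->
  cont_at distC (fun z => RIntC (F z) 0 1) z0.
Proof.
  intros HU [rho [Hrho Hex]] e He.
  destruct (HU (e/2)%R ltac:(lra)) as [d [Hd H1]].
  exists (Rmin d rho). split; [apply Rmin_pos; auto|]. intros z Hz. unfold distC in Hz.
  assert (Ez : ex_RIntC01 (F z)) by (apply Hex; eapply Cmod_lt_Rmin_r, Hz).
  assert (E0 : ex_RIntC01 (F z0)) by (apply Hex; rewrite (distC_self z0 : Cmod _ = _); auto).
  rewrite <- RIntC_minus, <- norm_CR by auto.
  apply Rle_lt_trans with ((1 - 0) * (e/2))%R; [|lra].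
  apply (norm_RInt_le_const (V := C_R_CompleteNormedModule) (fun t => F z t - F z0 t) 0 1);
    [lra| |apply RInt_correct, ex_RIntC01_minus; auto].
  intros t Ht. rewrite norm_CR. left. apply H1; [eapply Cmod_lt_Rmin_l, Hz|lra].
Qed.
End UnifLim.

Definition unif_slope (z0 : C) (F H : C -> R -> C) : Prop :=
  (exists rho, (0 < rho)%R /\ forall z, (Cmod (z - z0) < rho)%R ->
     forall t, (0 <= t <= 1)%R -> F z t = F z0 t + (z - z0) * H z t)
  /\ unif_lim z0 H (H z0).

Lemma unif_slope_mult_l z0 (a : R -> C) F H : bounded01 a -> bounded01 (H z0) ->
  unif_slope z0 F H -> unif_slope z0 (fun z t => a t * F z t) (fun z t => a t * H z t).
Proof.
  intros Ba BH [[rho [Hrho E]] U]. split.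
  - exists rho. split; auto. intros z Hz t Ht. rewrite (E z Hz t Ht). ring.
  - apply (unif_lim_mult z0 (fun _ => a)); auto. apply unif_lim_const.
Qed.

Lemma unif_slope_RIntC z0 F H : unif_slope z0 F H ->
  (exists rho, (0 < rho)%R /\ forall z, (Cmod (z - z0) < rho)%R -> ex_RIntC01 (F z)) ->
  ex_RIntC01 (H z0) ->
  is_slopeC (fun z => RIntC (F z) 0 1) z0 (fun z => RIntC (H z) 0 1).
Proof.
  intros [[r1 [Hr1 E1]] U1] [r2 [Hr2 Ex]] Ex0.
  set (rho := Rmin r1 r2).
  assert (Hrho : (0 < rho)%R) by (apply Rmin_pos; auto).
  assert (Ez0 : ex_RIntC01 (F z0)) by (apply Ex; rewrite (distC_self z0 : Cmod _ = _); auto).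
  assert (ExH : forall z, (Cmod (z - z0) < rho)%R -> ex_RIntC01 (H z)).
  { intros z Hz. destruct (Ceq_dec z z0) as [->|E]; auto.
    apply (ex_RIntC01_ext (fun t => / (z - z0) * (F z t - F z0 t))).
    - intros t Ht. rewrite (E1 z (Cmod_lt_Rmin_l _ _ _ Hz) t Ht).
      field. apply Cminus_eq_contra, E.
    - apply ex_RIntC01_Cmult, ex_RIntC01_minus; auto. apply Ex, (Cmod_lt_Rmin_r _ _ _ Hz). }
  split.
  - exists rho. split; auto. intros z Hz.
    rewrite (RIntC_ext (F z) (fun t => F z0 t + (z - z0) * H z t))
      by (intros; apply E1; auto; apply (Cmod_lt_Rmin_l _ _ _ Hz)).
    rewrite RIntC_plus, RIntC_Cmult; auto. apply ex_RIntC01_Cmult; auto.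
  - apply unif_lim_RIntC; auto. exists rho. auto.
Qed.

(** * Moving one branch point *)

Lemma upd_id (u : nat -> C) k : upd u k (u k) = u.
Proof.
  apply functional_extensionality. intros i. unfold upd.
  destruct (Nat.eqb_spec i k); subst; auto.
Qed.

Lemma upd_eq (u : nat -> C) k z : upd u k z k = z.
Proof. unfold upd. rewrite Nat.eqb_refl. auto. Qed.

Lemma upd_neq (u : nat -> C) k z i : i <> k -> upd u k z i = u i.
Proof. intros H. unfold upd. destruct (Nat.eqb_spec i k); [lia|auto]. Qed.

Lemma polydisc_upd g u0 r (u : nat -> C) k z : polydisc g u0 r u -> (Cmod (z - u0 k) < r)%R ->
  polydisc g u0 r (upd u k z).
Proof. intros H Hz i Hi. unfold upd. destruct (Nat.eqb_spec i k); subst; auto. Qed.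

Lemma cprod_upd_notin lo n (u : nat -> C) k z y : ~ (lo <= k < lo + n)%nat ->
  cprod_from lo n (fun i => y - upd u k z i) = cprod_from lo n (fun i => y - u i).
Proof. induction n; intros H; simpl; auto. rewrite IHn, upd_neq by lia. auto. Qed.

Lemma cprod_upd_in lo n (u : nat -> C) k z y : (lo <= k < lo + n)%nat ->
  cprod_from lo n (fun i => y - upd u k z i) * (y - u k)
  = cprod_from lo n (fun i => y - u i) * (y - z).
Proof.
  induction n; intros H; simpl; [lia|].
  destruct (Nat.eq_dec k (lo + n)%nat) as [->|E].
  - rewrite cprod_upd_notin, upd_eq by lia. ring.
  - rewrite upd_neq by lia.
    transitivity ((cprod_from lo n (fun i => y - upd u k z i) * (y - u k)) * (y - u (lo + n)%nat));
      [ring|rewrite IHn by lia; ring].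
Qed.

Lemma curve_rhs_upd g (u : nat -> C) k z y : (2 <= k <= 2 * g + 1)%nat ->
  curve_rhs g (upd u k z) y * (y - u k) = curve_rhs g u y * (y - z).
Proof.
  intros Hk. unfold curve_rhs.
  transitivity (y * (cprod_from 2 (2 * g) (fun i => y - upd u k z i) * (y - u k))); [ring|].
  rewrite cprod_upd_in by lia. ring.
Qed.

Lemma Re_neq0_of_sq (q h : C) : q * q = 1 - h -> (Cmod h < 1)%R -> Re q <> 0%R.
Proof.
  intros E Hh Z. destruct q as [a b]. simpl in Z. subst a.
  assert (Re (1 - h) = (- (b * b))%R) by (rewrite <- E; simpl; ring).
  pose proof (re_le_Cmod h). apply Rabs_le_between in H0.
  assert (Re (1 - h) = (1 - Re h)%R) by (destruct h; simpl; ring).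
  nra.
Qed.

(* For the square root [q] of [1 - h] in the right half-plane, [|q + 1| >= 1]
   turns [(q - 1)(q + 1) = -h] into [|q - 1| <= |h|]. *)
Lemma Cmod_sqrt_sub1_le (q h : C) : q * q = 1 - h -> (0 < Re q)%R -> (Cmod (q - 1) <= Cmod h)%R.
Proof.
  intros E Hq.
  assert (E2 : (q - 1) * (q + 1) = - h).
  { replace (- h) with (- 1 + (1 - h)) by ring. rewrite <- E. ring. }
  assert (H1 : (1 <= Cmod (q + 1))%R).
  { pose proof (re_le_Cmod (q + 1)).
    assert (Re (q + 1) = (Re q + 1)%R) by (destruct q; simpl; ring).
    rewrite H0 in H. apply Rabs_le_between in H. lra. }
  assert (Cmod (q - 1) * Cmod (q + 1) = Cmod h)%R by (rewrite <- Cmod_mult, E2, Cmod_opp; auto).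
  pose proof (Cmod_ge_0 (q - 1)). nra.
Qed.

Definition clamp01 (s : R) : R := Rmax 0 (Rmin 1 s).

Lemma clamp01_range s : (0 <= clamp01 s <= 1)%R.
Proof. unfold clamp01, Rmax, Rmin. repeat destruct Rle_dec; lra. Qed.

Lemma clamp01_id s : (0 <= s <= 1)%R -> clamp01 s = s.
Proof. intros. unfold clamp01, Rmax, Rmin. repeat destruct Rle_dec; lra. Qed.

Lemma clamp01_lipschitz a b : (Rabs (clamp01 a - clamp01 b) <= Rabs (a - b))%R.
Proof. unfold clamp01, Rmax, Rmin. repeat destruct Rle_dec; split_Rabs; lra. Qed.

(* Clamped so that it is continuous on all of [R], as [IVT_gen] requires. *)
Definition segment (a b : C) (s : R) : C := a + RtoC (clamp01 s) * (b - a).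

Lemma segment_0 a b : segment a b 0 = a.
Proof. unfold segment. rewrite clamp01_id by lra. ring. Qed.

Lemma segment_1 a b : segment a b 1 = b.
Proof. unfold segment. rewrite clamp01_id by lra. ring. Qed.

Lemma Cmod_segment_sub a b s : (Cmod (segment a b s - a) <= Cmod (b - a))%R.
Proof.
  unfold segment.
  replace (a + RtoC (clamp01 s) * (b - a) - a) with (RtoC (clamp01 s) * (b - a)) by ring.
  rewrite Cmod_mult, Cmod_R. pose proof (clamp01_range s). rewrite Rabs_pos_eq by lra.
  pose proof (Cmod_ge_0 (b - a)). nra.
Qed.

Lemma Cmod_segment_lipschitz a b s s' :
  (Cmod (segment a b s' - segment a b s) <= Rabs (s' - s) * Cmod (b - a))%R.
Proof.
  unfold segment.
  replace (a + RtoC (clamp01 s') * (b - a) - (a + RtoC (clamp01 s) * (b - a)))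
    with (RtoC (clamp01 s' - clamp01 s) * (b - a)) by (rewrite RtoC_minus; ring).
  rewrite Cmod_mult, Cmod_R. apply Rmult_le_compat_r; [apply Cmod_ge_0|apply clamp01_lipschitz].
Qed.

Lemma pos_of_nonvanishing (phi : R -> R) :
  (forall s eps, (0 < eps)%R -> exists del, (0 < del)%R /\
     forall s', (Rabs (s' - s) < del)%R -> (Rabs (phi s' - phi s) < eps)%R) ->
  (0 < phi 0)%R -> (forall s, (0 <= s <= 1)%R -> phi s <> 0%R) -> (0 < phi 1)%R.
Proof.
  intros Hc H0 Hn. destruct (Rlt_or_le 0 (phi 1)) as [H|H]; auto. exfalso.
  destruct (IVT_gen phi 0 1 0) as [s [Hs Es]].
  - intros s eps He. destruct (Hc s eps He) as [d [Hd H1]]. exists d. split; auto.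
    intros y [_ Hy]. apply H1, Hy.
  - rewrite Rmin_right, Rmax_left by lra. lra.
  - rewrite Rmin_left, Rmax_right in Hs by lra. apply (Hn s Hs Es).
Qed.

Section BranchTransport.
Variables (g : nat) (u0 : nat -> C) (r : R) (x d : R -> C) (W : (nat -> C) -> R -> C)
  (u : nat -> C) (k : nat).
Hypothesis HL : lifted_loop g (polydisc g u0 r) x d W.
Hypothesis Hu : polydisc g u0 r u.
Hypothesis Hk : (2 <= k <= 2 * g + 1)%nat.

Lemma loop_sub_neq0 t : (0 <= t <= 1)%R -> x t - u k <> 0.
Proof. intros Ht. apply Cminus_eq_contra, (loop_avoids _ _ _ _ _ HL u t Hu Ht), Hk. Qed.

Lemma loop_sub_bounded_away : bounded_away01 (fun t => x t - u k).
Proof.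
  apply cont_at01_bounded_away; [|apply loop_sub_neq0].
  intros t Ht. apply cont_at_minus; [apply (loop_cont_at _ _ _ _ _ HL), Ht|apply cont_at_const].
Qed.

Lemma loop_w_bounded : bounded01 (W u).
Proof. apply cont_at01_bounded. intros t Ht. apply (loop_w_cont_at _ _ _ _ _ HL); auto. Qed.

Lemma loop_w_bounded_away : bounded_away01 (W u).
Proof.
  apply cont_at01_bounded_away; intros t Ht;
    [apply (loop_w_cont_at _ _ _ _ _ HL)|apply (loop_w_neq0 _ _ _ _ _ HL)]; auto.
Qed.

Lemma loop_sub_bounded : bounded01 (fun t => x t - u k).
Proof.
  apply cont_at01_bounded. intros t Ht.
  apply cont_at_minus; [apply (loop_cont_at _ _ _ _ _ HL), Ht|apply cont_at_const].
Qed.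

Lemma loop_w_double_bounded_away : bounded_away01 (fun t => W u t + W u t).
Proof.
  apply cont_at01_bounded_away; intros t Ht.
  - apply cont_at_plus; apply (loop_w_cont_at _ _ _ _ _ HL); auto.
  - replace (W u t + W u t) with (2 * W u t) by ring.
    apply Cmult_neq_0; [apply C2_neq_0|apply (loop_w_neq0 _ _ _ _ _ HL); auto].
Qed.

Lemma inv_branch_slope_denom_bounded_away :
  bounded_away01 (fun t => (x t - u k) * W u t * (W u t + W u t)).
Proof.
  repeat apply bounded_away01_mult;
    auto using loop_sub_bounded_away, loop_w_bounded_away, loop_w_double_bounded_away.
Qed.

Lemma polydisc_upd_near z : (Cmod (z - u k) < r - Cmod (u k - u0 k))%R ->
  polydisc g u0 r (upd u k z).
Proof.
  intros H. apply polydisc_upd; auto. pose proof (Cmod_minus_triangle z (u k) (u0 k)). lra.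
Qed.

Lemma branch_ratio_sq z t : polydisc g u0 r (upd u k z) -> (0 <= t <= 1)%R ->
  (W (upd u k z) t / W u t) * (W (upd u k z) t / W u t) = 1 - (z - u k) / (x t - u k).
Proof.
  intros Hz Ht.
  assert (N1 := loop_sub_neq0 t Ht). assert (N2 := loop_w_neq0 _ _ _ _ _ HL u t Hu Ht).
  assert (E1 := loop_w_sq _ _ _ _ _ HL _ t Hz Ht). assert (E2 := loop_w_sq _ _ _ _ _ HL _ t Hu Ht).
  assert (E3 : curve_rhs g (upd u k z) (x t) = curve_rhs g u (x t) * (x t - z) / (x t - u k)).
  { rewrite <- (curve_rhs_upd g u k z (x t) Hk). field. auto. }
  transitivity ((W (upd u k z) t * W (upd u k z) t) / (W u t * W u t)); [field; auto|].
  rewrite E1, E2, E3. field. split; auto. rewrite <- E2. apply Cmult_neq_0; auto.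
Qed.

(* The only use of the continuous transport of the branch assumed in [lifted_loop]. *)
Lemma branch_ratio_segment_continuous z t :
  (Cmod (z - u k) < r - Cmod (u k - u0 k))%R -> (0 <= t <= 1)%R ->
  forall s eps, (0 < eps)%R -> exists del, (0 < del)%R /\ forall s', (Rabs (s' - s) < del)%R ->
    (Rabs (Re (W (upd u k (segment (u k) z s')) t / W u t)
           - Re (W (upd u k (segment (u k) z s)) t / W u t)) < eps)%R.
Proof.
  intros Hz Ht s eps Heps.
  assert (Hseg : forall s, polydisc g u0 r (upd u k (segment (u k) z s))).
  { intros s0. apply polydisc_upd_near. pose proof (Cmod_segment_sub (u k) z s0). lra. }
  assert (N0 := loop_w_neq0 _ _ _ _ _ HL u t Hu Ht).
  assert (Hm : (0 < Cmod (W u t))%R) by (apply Cmod_gt_0; auto).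
  destruct HL as [_ [_ [_ [_ [_ [_ [_ Hwu]]]]]]].
  destruct (Hwu t Ht _ (Hseg s) (eps * Cmod (W u t))%R ltac:(nra)) as [del [Hdel Hw]].
  pose proof (Cmod_ge_0 (z - u k)).
  exists (del / (Cmod (z - u k) + 1))%R. split; [apply Rdiv_lt_0_compat; lra|].
  intros s' Hs'.
  set (W' := W (upd u k (segment (u k) z s')) t). set (W0 := W (upd u k (segment (u k) z s)) t).
  replace (Re (W' / W u t) - Re (W0 / W u t))%R with (Re ((W' - W0) / W u t))
    by (replace ((W' - W0) / W u t) with (W' / W u t - W0 / W u t) by (field; auto);
        destruct (W' / W u t), (W0 / W u t); simpl; ring).
  eapply Rle_lt_trans; [apply re_le_Cmod|]. rewrite Cmod_div by auto.
  apply Rmult_lt_reg_r with (Cmod (W u t)); auto. unfold Rdiv.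
  rewrite Rmult_assoc, Rinv_l, Rmult_1_r by lra. apply Hw; [apply Hseg|].
  intros i Hi. destruct (Nat.eq_dec i k) as [->|Ei].
  - rewrite !upd_eq. eapply Rle_lt_trans; [apply Cmod_segment_lipschitz|].
    apply Rle_lt_trans with (Rabs (s' - s) * (Cmod (z - u k) + 1))%R;
      [apply Rmult_le_compat_l; [apply Rabs_pos|lra]|].
    apply Rmult_lt_reg_r with (/ (Cmod (z - u k) + 1))%R; [apply Rinv_0_lt_compat; lra|].
    rewrite Rmult_assoc, Rinv_r, Rmult_1_r by lra. exact Hs'.
  - rewrite !upd_neq by auto. replace (u i - u i) with (RtoC 0) by ring. rewrite Cmod_0. auto.
Qed.

Section NearBranch.
Variable del0 : R.
Hypothesis del0_pos : (0 < del0)%R.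
Hypothesis del0_le : forall t, (0 <= t <= 1)%R -> (del0 <= Cmod (x t - u k))%R.
Variable z : C.
Hypothesis z_near : (Cmod (z - u k) < del0 / 2)%R.
Hypothesis z_in : (Cmod (z - u k) < r - Cmod (u k - u0 k))%R.

(* Along the segment from [u k] to [z] the ratio squares to [1 - h] with [|h| < 1/2], so its
   real part never vanishes; it starts at [1], hence it stays positive. *)
Lemma branch_ratio_Re_pos t : (0 <= t <= 1)%R -> (0 < Re (W (upd u k z) t / W u t))%R.
Proof.
  intros Ht. rewrite <- (segment_1 (u k) z).
  apply (pos_of_nonvanishing (fun s => Re (W (upd u k (segment (u k) z s)) t / W u t))).
  - apply branch_ratio_segment_continuous; auto.
  - rewrite segment_0, upd_id. replace (W u t / W u t) with (RtoC 1)
      by (field; apply (loop_w_neq0 _ _ _ _ _ HL u t Hu Ht)). simpl. lra.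
  - intros s Hs. pose proof (Cmod_segment_sub (u k) z s).
    apply (Re_neq0_of_sq _ ((segment (u k) z s - u k) / (x t - u k))).
    + apply branch_ratio_sq; auto. apply polydisc_upd_near. lra.
    + rewrite Cmod_div by (apply loop_sub_neq0; auto).
      assert (Hx := del0_le t Ht).
      apply Rmult_lt_reg_r with (Cmod (x t - u k)); [lra|].
      unfold Rdiv. rewrite Rmult_assoc, Rinv_l by lra. lra.
Qed.

Lemma branch_close t : (0 <= t <= 1)%R ->
  (Cmod (W (upd u k z) t - W u t) <= Cmod (W u t) * (Cmod (z - u k) / del0))%R.
Proof.
  intros Ht.
  assert (Hq := branch_ratio_sq z t (polydisc_upd_near z z_in) Ht).
  assert (Hc := Cmod_sqrt_sub1_le _ _ Hq (branch_ratio_Re_pos t Ht)).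
  assert (N0 := loop_w_neq0 _ _ _ _ _ HL u t Hu Ht). assert (N1 := loop_sub_neq0 t Ht).
  replace (W (upd u k z) t - W u t) with (W u t * (W (upd u k z) t / W u t - 1)) by (field; auto).
  rewrite Cmod_mult. apply Rmult_le_compat_l; [apply Cmod_ge_0|].
  eapply Rle_trans; [exact Hc|]. rewrite Cmod_div by auto.
  unfold Rdiv. apply Rmult_le_compat_l; [apply Cmod_ge_0|].
  apply Rinv_le_contravar; auto.
Qed.

Lemma branch_neq0 t : (0 <= t <= 1)%R ->
  W (upd u k z) t <> 0 /\ W u t + W (upd u k z) t <> 0.
Proof.
  intros Ht. assert (Hs := branch_ratio_Re_pos t Ht).
  assert (N0 := loop_w_neq0 _ _ _ _ _ HL u t Hu Ht). split; intro E.
  - rewrite E in Hs. replace (0 / W u t) with (RtoC 0) in Hs by (field; auto). simpl in Hs. lra.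
  - replace (W (upd u k z) t) with (- W u t) in Hs
      by (replace (W (upd u k z) t) with ((W u t + W (upd u k z) t) - W u t) by ring;
          rewrite E; ring).
    replace (- W u t / W u t) with (RtoC (-1)) in Hs by (field; auto). simpl in Hs. lra.
Qed.
End NearBranch.

Lemma branch_unif_lim : unif_lim (u k) (fun z t => W (upd u k z) t) (W u).
Proof.
  destruct loop_sub_bounded_away as [del0 [Hd0 Hdel]].
  destruct loop_w_bounded as [MW [HMW BMW]].
  assert (Hr : (0 < r - Cmod (u k - u0 k))%R) by (pose proof (Hu k Hk); lra).
  intros e He.
  exists (Rmin (Rmin (del0/2) (r - Cmod (u k - u0 k))) (e * del0 / (2 * MW)))%R.
  split; [repeat apply Rmin_pos; try lra; apply Rdiv_lt_0_compat; nra|].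
  intros z Hz t Ht.
  assert (Hz1 := Cmod_lt_Rmin_l _ _ _ (Cmod_lt_Rmin_l _ _ _ Hz)).
  assert (Hz2 := Cmod_lt_Rmin_r _ _ _ (Cmod_lt_Rmin_l _ _ _ Hz)).
  assert (Hz3 := Cmod_lt_Rmin_r _ _ _ Hz).
  eapply Rle_lt_trans; [apply (branch_close del0 Hd0 Hdel z Hz1 Hz2 t Ht)|].
  apply Rle_lt_trans with (MW * (Cmod (z - u k) / del0))%R.
  { apply Rmult_le_compat_r; auto.
    apply Rmult_le_pos; [apply Cmod_ge_0|left; apply Rinv_0_lt_compat; auto]. }
  apply Rle_lt_trans with (MW * ((e * del0 / (2 * MW)) / del0))%R.
  { apply Rmult_le_compat_l; [lra|]. unfold Rdiv.
    apply Rmult_le_compat_r; [left; apply Rinv_0_lt_compat; auto|lra]. }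
  replace (MW * (e * del0 / (2 * MW) / del0))%R with (e / 2)%R by (field; lra). lra.
Qed.

(* Since [W_z^2 (x - u k) = W^2 (x - z)],
   [1/W_z - 1/W = (z - u k) W / ((x - u k) W_z (W + W_z))]. *)
Lemma inv_branch_unif_slope :
  unif_slope (u k) (fun z t => / W (upd u k z) t)
    (fun z t => W u t * / ((x t - u k) * W (upd u k z) t * (W u t + W (upd u k z) t))).
Proof.
  destruct loop_sub_bounded_away as [del0 [Hd0 Hdel]].
  assert (Hr : (0 < r - Cmod (u k - u0 k))%R) by (pose proof (Hu k Hk); lra).
  split.
  - exists (Rmin (del0 / 2) (r - Cmod (u k - u0 k))). split; [apply Rmin_pos; lra|].
    intros z Hz t Ht. rewrite upd_id.
    assert (Hz1 := Cmod_lt_Rmin_l _ _ _ Hz). assert (Hz2 := Cmod_lt_Rmin_r _ _ _ Hz).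
    destruct (branch_neq0 del0 Hd0 Hdel z Hz1 Hz2 t Ht) as [N1 N2].
    assert (N0 := loop_w_neq0 _ _ _ _ _ HL u t Hu Ht). assert (N3 := loop_sub_neq0 t Ht).
    assert (Q := branch_ratio_sq z t (polydisc_upd_near z Hz2) Ht).
    set (Wz := W (upd u k z) t) in *.
    assert (PW : Wz * Wz * (x t - u k) = W u t * W u t * (x t - u k) - W u t * W u t * (z - u k)).
    { transitivity ((Wz / W u t * (Wz / W u t)) * (W u t * W u t) * (x t - u k)); [field; auto|].
      rewrite Q. field. auto. }
    transitivity (/ W u t + (W u t - Wz) * (x t - u k) * (W u t + Wz)
                             / (Wz * W u t * (x t - u k) * (W u t + Wz))); [field; auto|].
    replace ((W u t - Wz) * (x t - u k) * (W u t + Wz)) with ((z - u k) * W u t * W u t)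
      by (transitivity (W u t * W u t * (x t - u k) - Wz * Wz * (x t - u k)); [rewrite PW|]; ring).
    field. auto.
  - rewrite upd_id.
    assert (BWW : bounded01 (fun t => W u t + W u t)).
    { destruct loop_w_bounded as [M [HM BM]]. exists (2 * M)%R. split; [lra|].
      intros t Ht. eapply Rle_trans; [apply Cmod_triangle|]. specialize (BM t Ht). lra. }
    assert (U1 : unif_lim (u k) (fun z t => (x t - u k) * W (upd u k z) t)
                   (fun t => (x t - u k) * W u t)).
    { apply (unif_lim_mult _ (fun _ t => x t - u k));
        auto using loop_sub_bounded, loop_w_bounded, unif_lim_const, branch_unif_lim. }
    assert (U2 : unif_lim (u k) (fun z t => W u t + W (upd u k z) t) (fun t => W u t + W u t)).
    { apply (unif_lim_plus _ (fun _ => W u)); [apply unif_lim_const|apply branch_unif_lim]. }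
    apply (unif_lim_mult _ (fun _ => W u)); [apply unif_lim_const| |apply loop_w_bounded|].
    + apply unif_lim_inv; [|apply inv_branch_slope_denom_bounded_away]. apply unif_lim_mult; auto.
      apply bounded01_mult; auto using loop_sub_bounded, loop_w_bounded.
    + apply bounded01_inv, inv_branch_slope_denom_bounded_away.
Qed.

(* Differentiation under the integral sign, along a parameter [u k] that moves a branch point:
   the factor [1 / W] contributes [1 / (2 (x - u k) W)]. *)
Lemma loop_integral_slope (f : C -> C) : (forall t, (0 <= t <= 1)%R -> cont_at distC f (x t)) ->
  exists h, h (u k) = RIntC (fun t => f (x t) / (2 * (x t - u k)) * d t / W u t) 0 1 /\
    is_slopeC (fun z => RIntC (fun t => f (x t) * d t / W (upd u k z) t) 0 1) (u k) h.
Proof.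
  intros Cf.
  assert (Ca : forall t, (0 <= t <= 1)%R -> cont_at distR (fun t => f (x t) * d t) t).
  { intros t Ht. apply cont_at_mult; [apply cont_at_comp; auto|].
    - apply (loop_cont_at _ _ _ _ _ HL), Ht.
    - apply (loop_dp_cont_at _ _ _ _ _ HL), Ht. }
  set (Hinv := fun z t => W u t * / ((x t - u k) * W (upd u k z) t * (W u t + W (upd u k z) t))).
  assert (Hinv0 : forall t, (0 <= t <= 1)%R ->
    f (x t) * d t * Hinv (u k) t = f (x t) / (2 * (x t - u k)) * d t / W u t).
  { intros t Ht. unfold Hinv. rewrite upd_id.
    assert (N1 := loop_sub_neq0 t Ht). assert (N2 := loop_w_neq0 _ _ _ _ _ HL u t Hu Ht).
    field. repeat split; auto using C2_neq_0. replace (W u t + W u t) with (2 * W u t) by ring.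
    apply Cmult_neq_0; auto using C2_neq_0. }
  assert (BHinv : bounded01 (Hinv (u k))).
  { unfold Hinv. rewrite upd_id.
    apply bounded01_mult; [apply loop_w_bounded|].
    apply bounded01_inv, inv_branch_slope_denom_bounded_away. }
  assert (S := unif_slope_mult_l _ _ _ _ (cont_at01_bounded _ Ca) BHinv inv_branch_unif_slope).
  exists (fun z => RIntC (fun t => f (x t) * d t * Hinv z t) 0 1). split.
  - apply RIntC_ext, Hinv0.
  - apply unif_slope_RIntC; auto.
    + exists (r - Cmod (u k - u0 k))%R. split; [pose proof (Hu k Hk); lra|].
      intros z Hz. apply (ex_RIntC01_loop _ _ _ _ _ HL); auto. apply polydisc_upd_near, Hz.
    + apply (ex_RIntC01_ext (fun t => (fun y => f y / (2 * (y - u k))) (x t) * d t / W u t));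
        [intros t Ht; symmetry; apply Hinv0, Ht|].
      apply (ex_RIntC01_loop _ _ _ _ _ HL u (fun y => f y / (2 * (y - u k))) Hu).
      intros t Ht. unfold Cdiv. apply cont_at_mult; auto.
      apply cont_at_inv; [|apply Cmult_neq_0; [apply C2_neq_0|apply loop_sub_neq0, Ht]].
      apply cont_at_mult; [apply cont_at_const|].
      apply cont_at_minus; [apply cont_at_id|apply cont_at_const].
Qed.
End BranchTransport.

Section PeriodSlope.
Variables (g : nat) (u0 : nat -> C) (r : R) (m : nat) (c : nat -> C) (p dp : nat -> R -> C)
  (w : nat -> (nat -> C) -> R -> C) (u : nat -> C) (k : nat).
Hypothesis HL : forall l, (l < m)%nat -> lifted_loop g (polydisc g u0 r) (p l) (dp l) (w l).
Hypothesis Hu : polydisc g u0 r u.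
Hypothesis Hk : (2 <= k <= 2 * g + 1)%nat.

Lemma period_slope (f : C -> C) : cont_on_loops m p f ->
  exists h, h (u k) = period m c p dp w u (fun y => f y / (2 * (y - u k))) /\
    is_slopeC (fun z => period m c p dp w (upd u k z) f) (u k) h.
Proof.
  intros Hf. unfold period.
  cut (forall n, (n <= m)%nat -> exists h, h (u k) =
    csum_from 0 n (fun l => c l * RIntC (fun t =>
      f (p l t) / (2 * (p l t - u k)) * dp l t / w l u t) 0 1) /\
    is_slopeC (fun z => csum_from 0 n (fun l =>
      c l * RIntC (fun t => f (p l t) * dp l t / w l (upd u k z) t) 0 1)) (u k) h).
  { intros Gen. apply Gen. lia. }
  induction n; intros Hn.
  - exists (fun _ => 0). split; [reflexivity|apply (is_slope_const _ _ 0)].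
  - destruct IHn as [h1 [E1 S1]]; [lia|].
    destruct (loop_integral_slope g u0 r (p n) (dp n) (w n) u k (HL n ltac:(lia)) Hu Hk f
                (Hf n ltac:(lia))) as [h2 [E2 S2]].
    exists (fun z => h1 z + c (0 + n)%nat * h2 z). split.
    + simpl. rewrite E1, E2. reflexivity.
    + apply is_slope_plus; auto. apply is_slope_scal. auto.
Qed.
End PeriodSlope.

Lemma loop_avoids_u g u0 r m p dp w u :
  (forall l, (l < m)%nat -> lifted_loop g (polydisc g u0 r) (p l) (dp l) (w l)) ->
  polydisc g u0 r u -> forall l t i, (l < m)%nat -> (0 <= t <= 1)%R ->
  (2 <= i <= 2 * g + 1)%nat -> p l t <> u i.
Proof. intros HL Hu l t i Hl Ht Hi. apply (loop_avoids _ _ _ _ _ (HL l Hl) u t Hu Ht), Hi. Qed.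

(** * The Schlesinger system *)

Lemma mat2_ext (A B : mat2) :
  m11 A = m11 B -> m12 A = m12 B -> m21 A = m21 B -> m22 A = m22 B -> A = B.
Proof. destruct A, B; simpl; intros; subst; auto. Qed.

Lemma m11_msum lo n f : m11 (msum_from lo n f) = csum_from lo n (fun j => m11 (f j)).
Proof. induction n; simpl; auto. rewrite IHn. auto. Qed.

Lemma m12_msum lo n f : m12 (msum_from lo n f) = csum_from lo n (fun j => m12 (f j)).
Proof. induction n; simpl; auto. rewrite IHn. auto. Qed.

Lemma m21_msum lo n f : m21 (msum_from lo n f) = csum_from lo n (fun j => m21 (f j)).
Proof. induction n; simpl; auto. rewrite IHn. auto. Qed.

Lemma m22_msum lo n f : m22 (msum_from lo n f) = csum_from lo n (fun j => m22 (f j)).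
Proof. induction n; simpl; auto. rewrite IHn. auto. Qed.

Definition strictly_upper (A : mat2) : Prop := m11 A = 0 /\ m21 A = 0 /\ m22 A = 0.

Lemma mcomm_strictly_upper (A B : mat2) : m21 A = 0 -> m21 B = 0 -> strictly_upper (mcomm A B).
Proof.
  destruct A, B; simpl; intros -> ->.
  unfold strictly_upper, mcomm, madd, mopp, mscale, mmul; simpl. repeat split; ring.
Qed.

Lemma mscale_strictly_upper s A : strictly_upper A -> strictly_upper (mscale s A).
Proof.
  intros [H1 [H2 H3]]. unfold strictly_upper; simpl. rewrite H1, H2, H3. repeat split; ring.
Qed.

Lemma msum_strictly_upper lo n f : (forall j, (lo <= j < lo + n)%nat -> strictly_upper (f j)) ->
  strictly_upper (msum_from lo n f).
Proof.
  intros H. unfold strictly_upper. rewrite m11_msum, m21_msum, m22_msum.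
  repeat split; apply csum_zero; intros j Hj; apply H, Hj.
Qed.

Lemma is_mderiv_of_m12 (F : C -> mat2) z0 M :
  (forall z, m11 (F z) = m11 (F z0) /\ m21 (F z) = 0 /\ m22 (F z) = m22 (F z0)) ->
  strictly_upper M -> is_derive (K := C_AbsRing) (fun z => m12 (F z)) z0 (m12 M) ->
  is_mderiv F z0 M.
Proof.
  intros HF [M1 [M2 M3]] H12. unfold is_mderiv. rewrite M1, M2, M3.
  split; [|split; [exact H12|split]]; apply is_deriveC_const_on; intros z;
    destruct (HF z) as [E1 [E2 E3]]; destruct (HF z0) as [_ [E2' _]]; congruence.
Qed.

Section Coefficients.
Variables (m : nat) (c : nat -> C) (p dp : nat -> R -> C) (w : nat -> (nat -> C) -> R -> C).

Lemma Amat_diag v v' i :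
  m11 (Amat m c p dp w v i) = m11 (Amat m c p dp w v' i) /\ m21 (Amat m c p dp w v i) = 0 /\
  m22 (Amat m c p dp w v i) = m22 (Amat m c p dp w v' i).
Proof. unfold Amat. destruct (Nat.eqb i 1); repeat split. Qed.

Lemma Amat_m12 v i : m12 (Amat m c p dp w v i) = acoef m c p dp w v i.
Proof. unfold Amat. destruct (Nat.eqb_spec i 1); subst; reflexivity. Qed.

Lemma acoef_neq1 v i : i <> 1%nat -> acoef m c p dp w v i =
  period m c p dp w v (fun _ => 1) + v i * period m c p dp w v (fun z => / (z - v i)).
Proof. intros H. unfold acoef. destruct (Nat.eqb_spec i 1); [lia|reflexivity]. Qed.

Lemma Amat_m21 v i : m21 (Amat m c p dp w v i) = 0.
Proof. apply (Amat_diag v v i). Qed.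

(* The diagonals are [-1/4, 1/4] for [k >= 2] and [1/4, -1/4] for [1], hence the signs. *)
Lemma m12_mcomm_Amat v k j : k <> 1%nat ->
  m12 (mcomm (Amat m c p dp w v k) (Amat m c p dp w v j)) =
  if Nat.eqb j 1 then - (acoef m c p dp w v k + acoef m c p dp w v j) / 2
  else (acoef m c p dp w v k - acoef m c p dp w v j) / 2.
Proof.
  intros Hk. unfold mcomm, madd, mopp, mscale, mmul, Amat. cbn [m11 m12 m21 m22].
  apply Nat.eqb_neq in Hk. rewrite Hk.
  assert (Q1 : RtoC (1/4) = / 4) by (unfold Cinv, RtoC; simpl; f_equal; field).
  assert (Q2 : RtoC (-1/4) = - / 4) by (unfold Cinv, Copp, RtoC; simpl; f_equal; field).
  destruct (Nat.eqb_spec j 1) as [->|]; cbn [m11 m12 m21 m22]; rewrite ?Q1, ?Q2;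
    toC; field.
Qed.

Lemma Ainf_eq g u u' :
  csum_from 1 (2 * g + 1) (acoef m c p dp w u) = csum_from 1 (2 * g + 1) (acoef m c p dp w u') ->
  Ainf g m c p dp w u = Ainf g m c p dp w u'.
Proof.
  intros H. unfold Ainf, mopp, mscale. apply mat2_ext; cbn [m11 m12 m21 m22];
    rewrite ?m11_msum, ?m12_msum, ?m21_msum, ?m22_msum; f_equal.
  - apply csum_ext. intros. apply Amat_diag.
  - transitivity (csum_from 1 (2 * g + 1) (acoef m c p dp w u));
      [|rewrite H]; apply csum_ext; intros; [|symmetry]; apply Amat_m12.
  - apply csum_ext. intros. rewrite !Amat_m21. auto.
  - apply csum_ext. intros. apply Amat_diag.
Qed.
End Coefficients.

Lemma id_mul_curve_logderiv g (u : nat -> C) (y : C) : y <> 0 ->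
  (forall i, (2 <= i <= 2 * g + 1)%nat -> y <> u i) ->
  y * curve_logderiv g u y = INR (2 * g) + 1 + csum_from 2 (2 * g) (fun i => u i * / (y - u i)).
Proof.
  intros H0 Hi. unfold curve_logderiv.
  rewrite Cmult_plus_distr_l, <- csum_scal.
  rewrite (csum_ext _ _ _ (fun i => 1 + u i * / (y - u i))), csum_plus, csum_const.
  - field. auto.
  - intros i Hir. field. apply Cminus_eq_contra, Hi. lia.
Qed.

Section AinfConstant.
Variables (g : nat) (u0 : nat -> C) (r : R) (m : nat) (c : nat -> C) (p dp : nat -> R -> C)
  (w : nat -> (nat -> C) -> R -> C) (u : nat -> C).
Hypothesis HL : forall l, (l < m)%nat -> lifted_loop g (polydisc g u0 r) (p l) (dp l) (w l).
Hypothesis Hu : polydisc g u0 r u.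

Let P := period m c p dp w u.

Lemma cont_on_loops_inv_sub_u i :
  (2 <= i <= 2 * g + 1)%nat -> cont_on_loops m p (fun y => / (y - u i)).
Proof.
  intros Hi. apply cont_on_loops_inv_sub. intros l t Hl Ht.
  apply (loop_avoids_u g u0 r m p dp w u HL Hu); auto.
Qed.

Lemma cont_on_loops_sum_u_inv_sub :
  cont_on_loops m p (fun y => csum_from 2 (2 * g) (fun i => u i * / (y - u i))).
Proof.
  apply cont_on_loops_csum. intros i Hi l Hl t Ht.
  apply cont_at_mult; [apply cont_at_const|apply cont_on_loops_inv_sub_u; auto; lia].
Qed.

Lemma sum_acoef_eq :
  csum_from 1 (2 * g + 1) (acoef m c p dp w u)
  = (INR (2 * g) - 1) * P (fun _ => 1)
    + P (fun y => csum_from 2 (2 * g) (fun i => u i * / (y - u i))).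
Proof.
  replace (2 * g + 1)%nat with (S (2 * g)) by lia. rewrite csum_from1.
  rewrite (csum_ext 2 (2*g) _ (fun i => P (fun _ => 1) + P (fun y => u i * / (y - u i)))).
  - rewrite csum_plus, csum_const. unfold P.
    rewrite (period_csum g m _ c p dp w HL u 2 (2 * g) (fun i y => u i * / (y - u i))); auto.
    + unfold acoef at 1. simpl Nat.eqb. cbv iota. toC. ring.
    + intros i Hi l Hl t Ht.
      apply cont_at_mult; [apply cont_at_const|apply cont_on_loops_inv_sub_u; auto; lia].
  - intros i Hi. rewrite acoef_neq1 by lia. unfold P.
    rewrite (period_scal g m _ c p dp w HL) by (auto; apply cont_on_loops_inv_sub_u; lia).
    reflexivity.
Qed.

(* Exactness of [d(y / v)] gives the linear relation between the periods. *)
Lemma period_sum_u_inv_sub :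
  P (fun y => csum_from 2 (2 * g) (fun i => u i * / (y - u i)))
  = (1 - INR (2 * g)) * P (fun _ => 1).
Proof.
  set (S := P (fun y => csum_from 2 (2 * g) (fun i => u i * / (y - u i)))).
  set (I := P (fun _ => 1)).
  assert (Hex : P (fun y => 1 - y * curve_logderiv g u y / 2) = 0).
  { refine (period_exact g m _ c p dp w HL u (fun y => y) (fun _ => 1) Hu _).
    intros l Hl t Ht. split; [|apply cont_at_const].
    apply (is_slopeC_derive _ _ (fun _ => 1)), is_slopeC_id. }
  rewrite (period_ext m c p dp w u _ (fun y => (1 - INR (2 * g)) / 2 * (fun _ => 1) y
     + (- / 2) * (fun y => csum_from 2 (2 * g) (fun i => u i * / (y - u i))) y)) in Hex.
  - rewrite (period_lin g m _ c p dp w HL) in Hex;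
      auto using cont_on_loops_const, cont_on_loops_sum_u_inv_sub.
    fold P I S in Hex.
    transitivity ((1 - INR (2 * g)) / 2 * I * 2 - 2 * ((1 - INR (2 * g)) / 2 * I + (- / 2) * S));
      [field; apply C2_neq_0|].
    rewrite Hex. field; apply C2_neq_0.
  - intros l Hl t Ht. cbv beta.
    destruct (loop_avoids _ _ _ _ _ (HL l Hl) u t Hu Ht) as [H0 Hi].
    rewrite (id_mul_curve_logderiv g u (p l t) H0 Hi). field; apply C2_neq_0.
Qed.

Lemma sum_acoef_zero : csum_from 1 (2 * g + 1) (acoef m c p dp w u) = 0.
Proof. rewrite sum_acoef_eq, period_sum_u_inv_sub. ring. Qed.
End AinfConstant.

Section Schlesinger.
Variables (g : nat) (u0 : nat -> C) (r : R) (m : nat) (c : nat -> C) (p dp : nat -> R -> C)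
  (w : nat -> (nat -> C) -> R -> C) (u : nat -> C) (k : nat).
Hypothesis HL : forall l, (l < m)%nat -> lifted_loop g (polydisc g u0 r) (p l) (dp l) (w l).
Hypothesis Hu : polydisc g u0 r u.
Hypothesis Hk : (2 <= k <= 2 * g + 1)%nat.
Hypothesis u_neq0 : forall i, (2 <= i <= 2 * g + 1)%nat -> u i <> 0.
Hypothesis u_inj : forall i j, (2 <= i <= 2 * g + 1)%nat -> (2 <= j <= 2 * g + 1)%nat ->
  i <> j -> u i <> u j.

Let P := period m c p dp w u.
Let J i := P (fun y => / (y - u i)).

Definition schlesinger_rhs (v : nat -> C) (j : nat) : mat2 :=
  mscale (/ (uu v k - uu v j)) (mcomm (Amat m c p dp w v k) (Amat m c p dp w v j)).

Lemma schlesinger_rhs_strictly_upper j : strictly_upper (schlesinger_rhs u j).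
Proof. apply mscale_strictly_upper, mcomm_strictly_upper; apply Amat_m21. Qed.

Lemma loop_sub_u_neq0 i l t : (2 <= i <= 2 * g + 1)%nat -> (l < m)%nat -> (0 <= t <= 1)%R ->
  p l t - u i <> 0.
Proof. intros. apply Cminus_eq_contra, (loop_avoids_u g u0 r m p dp w u HL Hu); auto. Qed.

Lemma period_one_slope : exists h, h (u k) = / 2 * J k /\
  is_slopeC (fun z => period m c p dp w (upd u k z) (fun _ => 1)) (u k) h.
Proof.
  destruct (period_slope g u0 r m c p dp w u k HL Hu Hk (fun _ => 1)) as [h [E S]];
    [apply cont_on_loops_const|].
  exists h. split; auto. rewrite E. unfold J, P.
  rewrite <- (period_scal g m _ c p dp w HL u _ _ Hu
                (cont_on_loops_inv_sub_u g u0 r m p dp w u HL Hu k Hk)).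
  apply period_ext. intros l Hl t Ht. assert (N := loop_sub_u_neq0 k l t Hk Hl Ht).
  field. auto.
Qed.

Lemma period_inv_sub_slope j : (2 <= j <= 2 * g + 1)%nat -> j <> k ->
  exists h, h (u k) = (J k - J j) / (2 * (u k - u j)) /\
  is_slopeC (fun z => period m c p dp w (upd u k z) (fun y => / (y - u j))) (u k) h.
Proof.
  intros Hj Hjk.
  destruct (period_slope g u0 r m c p dp w u k HL Hu Hk (fun y => / (y - u j)))
    as [h [E S]]; [apply (cont_on_loops_inv_sub_u g u0 r m p dp w u HL Hu j Hj)|].
  exists h. split; auto. rewrite E. unfold J, P.
  assert (Nkj := Cminus_eq_contra _ _ (u_inj k j Hk Hj (not_eq_sym Hjk))).
  rewrite (period_ext m c p dp w u _ (fun y => / (2 * (u k - u j)) * (fun y => / (y - u k)) y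
                                         + (- / (2 * (u k - u j))) * (fun y => / (y - u j)) y)).
  - rewrite (period_lin g m _ c p dp w HL); auto;
      [|apply (cont_on_loops_inv_sub_u g u0 r m p dp w u HL Hu); auto..].
    field; repeat split; auto using C2_neq_0.
  - intros l Hl t Ht.
    assert (N1 := loop_sub_u_neq0 k l t Hk Hl Ht). assert (N2 := loop_sub_u_neq0 j l t Hj Hl Ht).
    field; repeat split; auto using C2_neq_0.
Qed.

Lemma acoef_upd_derive j : (1 <= j <= 2 * g + 1)%nat -> j <> k ->
  is_derive (K := C_AbsRing) (fun z => acoef m c p dp w (upd u k z) j) (u k)
    (m12 (schlesinger_rhs u j)).
Proof.
  intros Hj Hjk. destruct period_one_slope as [h1 [E1 S1]].
  assert (Uk : uu u k = u k) by (unfold uu; destruct (Nat.eqb_spec k 1); [lia|auto]).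
  unfold schlesinger_rhs. cbn [m12 mscale]. rewrite m12_mcomm_Amat, Uk by lia.
  rewrite (acoef_neq1 m c p dp w u k) by lia. fold P. fold (J k).
  assert (Nk := u_neq0 k Hk).
  destruct (Nat.eq_dec j 1) as [->|Hj1].
  - assert (S := is_slope_scal distC Cminus (-1) _ _ _ S1).
    apply (is_slope_ext _ _ _ (fun z => acoef m c p dp w (upd u k z) 1)) in S;
      [|intros z; unfold acoef; simpl; ring].
    eapply is_derive_eq; [exact (is_slopeC_derive _ _ _ S)|].
    rewrite E1. change (acoef m c p dp w u 1) with (- P (fun _ => 1)). unfold uu. simpl.
    replace (u k - 0) with (u k) by ring. field. auto.
  - assert (Hj2 : (2 <= j <= 2 * g + 1)%nat) by lia.
    destruct (period_inv_sub_slope j Hj2 Hjk) as [h2 [E2 S2]].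
    assert (S := is_slope_plus _ _ _ _ _ _ _ S1 (is_slope_scal distC Cminus (u j) _ _ _ S2)).
    apply (is_slope_ext _ _ _ (fun z => acoef m c p dp w (upd u k z) j)) in S;
      [|intros z; rewrite acoef_neq1, upd_neq by lia; reflexivity].
    eapply is_derive_eq; [exact (is_slopeC_derive _ _ _ S)|].
    rewrite E1, E2, acoef_neq1 by lia. fold P. fold (J j).
    unfold uu. rewrite (proj2 (Nat.eqb_neq j 1) Hj1). cbv iota.
    assert (Nkj := Cminus_eq_contra _ _ (u_inj k j Hk Hj2 (not_eq_sym Hjk))).
    toC. field; repeat split; auto using C2_neq_0.
Qed.

Lemma schlesinger_offdiag j : (1 <= j <= 2 * g + 1)%nat -> j <> k ->
  is_mderiv (fun z => Amat m c p dp w (upd u k z) j) (u k) (schlesinger_rhs u j).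
Proof.
  intros Hj Hjk.
  apply is_mderiv_of_m12; [intros; apply Amat_diag|apply schlesinger_rhs_strictly_upper|].
  apply (is_derive_ext (fun z => acoef m c p dp w (upd u k z) j));
    [intros; symmetry; apply Amat_m12|apply acoef_upd_derive; auto].
Qed.

(* The diagonal equation is the derivative of [sum_i a_i = 0], valid on a whole neighbourhood. *)
Lemma acoef_upd_derive_diag :
  is_derive (K := C_AbsRing) (fun z => acoef m c p dp w (upd u k z) k) (u k)
    (- csum_from 1 (2 * g + 1) (fun j => if Nat.eqb j k then 0 else m12 (schlesinger_rhs u j))).
Proof.
  apply (is_deriveC_ext_near (fun z => - csum_from 1 (2 * g + 1)
           (fun j => if Nat.eqb j k then 0 else acoef m c p dp w (upd u k z) j))).
  - exists (r - Cmod (u k - u0 k))%R. split; [pose proof (Hu k Hk); lra|]. intros z Hz.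
    rewrite csum_skip,
      (sum_acoef_zero g u0 r m c p dp w _ HL (polydisc_upd_near g u0 r u k Hu z Hz))
      by lia. ring.
  - apply (is_derive_opp (K := C_AbsRing) (V := C_NormedModule)).
    apply (is_deriveC_csum 1 (2 * g + 1)
             (fun j z => if Nat.eqb j k then 0 else acoef m c p dp w (upd u k z) j)).
    intros j Hj. destruct (Nat.eqb_spec j k) as [->|Hjk].
    + apply is_deriveC_const_on. reflexivity.
    + apply acoef_upd_derive; auto. lia.
Qed.

Lemma schlesinger_diag :
  is_mderiv (fun z => Amat m c p dp w (upd u k z) k) (u k)
    (mopp (msum_from 1 (2 * g + 1) (fun j => if Nat.eqb j k then mzero else schlesinger_rhs u j))).
Proof.
  apply is_mderiv_of_m12; [intros; apply Amat_diag| |].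
  - apply mscale_strictly_upper, msum_strictly_upper. intros j _.
    destruct (Nat.eqb j k); [repeat split|apply schlesinger_rhs_strictly_upper].
  - apply (is_derive_ext (fun z => acoef m c p dp w (upd u k z) k));
      [intros; symmetry; apply Amat_m12|].
    eapply is_derive_eq; [apply acoef_upd_derive_diag|].
    unfold mopp, mscale. cbn [m12]. rewrite m12_msum. toC.
    rewrite (csum_ext _ _ (fun j => m12 (if Nat.eqb j k then mzero else schlesinger_rhs u j))
               (fun j => if Nat.eqb j k then 0 else m12 (schlesinger_rhs u j)));
      [ring|intros j _; destruct (Nat.eqb j k); reflexivity].
Qed.
End Schlesinger.

Theorem corollary2 (g : nat) (u0 : nat -> C) (r : R)
  (m : nat) (c : nat -> C) (p dp : nat -> R -> C)
  (w : nat -> (nat -> C) -> R -> C) :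
  (1 <= g)%nat -> (0 < r)%R ->
  (forall u, polydisc g u0 r u -> forall i, (2 <= i <= 2 * g + 1)%nat -> u i <> 0) ->
  (forall u, polydisc g u0 r u -> forall i j,
      (2 <= i <= 2 * g + 1)%nat -> (2 <= j <= 2 * g + 1)%nat -> i <> j -> u i <> u j) ->
  (forall k, (k < m)%nat -> lifted_loop g (polydisc g u0 r) (p k) (dp k) (w k)) ->
  (forall u, polydisc g u0 r u -> forall k, (2 <= k <= 2 * g + 1)%nat ->
     (forall j, (1 <= j <= 2 * g + 1)%nat -> j <> k ->
        is_mderiv (fun z => Amat m c p dp w (upd u k z) j) (u k)
          (mscale (/ (uu u k - uu u j))
             (mcomm (Amat m c p dp w u k) (Amat m c p dp w u j)))) /\
     is_mderiv (fun z => Amat m c p dp w (upd u k z) k) (u k)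
       (mopp (msum_from 1 (2 * g + 1) (fun j =>
          if Nat.eqb j k then mzero
          else mscale (/ (uu u k - uu u j))
                 (mcomm (Amat m c p dp w u k) (Amat m c p dp w u j)))))) /\
  (forall u u', polydisc g u0 r u -> polydisc g u0 r u' ->
     Ainf g m c p dp w u = Ainf g m c p dp w u').
Proof.
  intros _ _ u_neq0 u_inj HL. split.
  - intros u Hu k Hk. split.
    + intros j Hj Hjk.
      exact (schlesinger_offdiag g u0 r m c p dp w u k HL Hu Hk (u_neq0 u Hu) (u_inj u Hu)
               j Hj Hjk).
    + exact (schlesinger_diag g u0 r m c p dp w u k HL Hu Hk (u_neq0 u Hu) (u_inj u Hu)).
  - intros u u' Hu Hu'. apply Ainf_eq.
    rewrite (sum_acoef_zero g u0 r m c p dp w u HL Hu),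
            (sum_acoef_zero g u0 r m c p dp w u' HL Hu').
    reflexivity.
Qed.
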